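(* Let $\mathcal T=(\mathcal S,\to)$ be an LTS over $\Sigma$ and $\mathcal V$ a valuation, and let $S\subseteq\mathcal S$ and a well-formed formula $\Phi$ in positive normal form be such that $S\subseteq[\![\Phi]\!]_{\mathcal V}$. Then the sequent $S\vdash^{\mathcal T}_{\mathcal V,\varepsilon}\Phi$ (with empty definition list $\varepsilon$) has a successful tableau, i.e. there is a successful tableau whose root is labelled by this sequent.
   Context: Fix a set $\Sigma$ and a countably infinite set $\mathrm{Var}$ of propositional variables. An LTS is $\mathcal T=(\mathcal S,\to)$ with ${\to}\subseteq\mathcal S\times\Sigma\times\mathcal S$; for $K\subseteq\Sigma$ write $s\xrightarrow{K}s'$ if $s\xrightarrow{a}s'$ for some $a\in K$. A valuation is $\mathcal V:\mathrm{Var}\to 2^{\mathcal S}$. Formulas: $\Phi::=Z\mid\neg\Phi\mid\Phi_1\wedge\Phi_2\mid[K]\Phi\mid\nu Z.\Phi$, well-formed if in each subformula $\nu Z.\Phi$ every free occurrence of $Z$ in $\Phi$ is under an even number of negations. Derived: $\Phi_1\vee\Phi_2=\neg(\neg\Phi_1\wedge\neg\Phi_2)$, $\langle K\rangle\Phi=\neg[K]\neg\Phi$, $\mu Z.\Phi=\neg\nu Z.\neg\Phi[Z:=\neg Z]$. Semantics: $[\![Z]\!]_{\mathcal V}=\mathcal V(Z)$, negation is complement, $\wedge$ is intersection, $[\![[K]\Phi]\!]_{\mathcal V}=\{s\mid\forall s'.\ s\xrightarrow{K}s'\Rightarrow s'\in[\![\Phi]\!]_{\mathcal V}\}$, $[\![\nu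 Z.\Phi]\!]_{\mathcal V}=\bigcup\{S'\mid S'\subseteq[\![\Phi]\!]_{\mathcal V[Z:=S']}\}$. Positive normal form: built from $Z,\neg Z,\wedge,\vee,[K],\langle K\rangle,\nu,\mu$. Substitution is capture-free. Definition list: $\Delta=(U_1=\Phi_1)\cdots(U_n=\Phi_n)$, distinct $U_i\in\mathrm{Var}$, no $U_i$ bound in any $\Phi_j$, $U_j$ not free in $\Phi_i$ for $i\le j$; $\Delta(U_i)=\Phi_i$, $\mathrm{dom}(\Delta)=\{U_i\}$. $\mathcal V[\varepsilon]=\mathcal V$, $\mathcal V[(U=\Phi)\cdot\Delta]=(\mathcal V[U:=[\![\Phi]\!]_{\mathcal V}])[\Delta]$. A sequent $S\vdash^{\mathcal T}_{\mathcal V,\Delta}\Phi$: $S\subseteq\mathcal S$, $\Delta$ a definition list, $\Phi$ in positive normal form with every $U\in\mathrm{dom}(\Delta)$ positive and not bound in $\Phi$. Rules (conclusion; premises): ($\wedge$) $S\vdash_\Delta\Phi_1\wedge\Phi_2$; $S\vdash_\Delta\Phi_1$, $S\vdash_\Delta\Phi_2$. ($\vee$) $S\vdash_\Delta\Phi_1\vee\Phi_2$; $S_1\vdash_\Delta\Phi_1$, $S_2\vdash_\Delta\Phi_2$, $S=S_1\cup S_2$. ($[K]$) $S\vdash_\Delta[K]\Phi$; $\{s'\mid\exists s\in S.\ s\xrightarrow{K}s'\}\vdash_\Delta\Phi$. ($\langle K\rangle$ with witness $f:S\to\mathcal S$, $s\xrightarrow{K}f(s)$ for all $s\in S$) $S\vdash_\Delta\langle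 K\rangle\Phi$; $f(S)\vdash_\Delta\Phi$. ($\sigma Z$) $S\vdash_\Delta\sigma Z.\Phi$; $S\vdash_{\Delta\cdot(U=\sigma Z.\Phi)}U$, $U$ fresh. (Un) $S\vdash_\Delta U$; $S\vdash_\Delta\Phi[Z:=U]$ where $\Delta(U)=\sigma Z.\Phi$. (Thin) $S\vdash_\Delta\Phi$; $S'\vdash_\Delta\Phi$, $S\subseteq S'$. A partial tableau is a finite nonempty ordered tree of nodes labelled by sequents over $\mathcal T,\mathcal V$, each internal node labelled by a rule application (rule name, plus witness function for $\langle K\rangle$) such that it and its ordered children form an instance of the rule. Write $S_n$ for the state set of node $n$. It is a tableau if the root's definition list is empty and every leaf $n$ (sequent $S_n\vdash_\Delta\Phi$) is terminal: (a) $\Phi$ is $Z$ or $\neg Z$ with $Z\notin\mathrm{dom}(\Delta)$; or (b) $\Phi=\langle K\rangle\Psi$ and some $s\in S_n$ has no $K$-successor (diamond leaf); or (c) $\Phi=U\in\mathrm{dom}(\Delta)$ and some strict ancestor $m$ has formula $U$ and $S_n\subseteq S_m$ ($\sigma$-leaf; $\mu$-/$\nu$-leaf according to $\Delta(U)$). Companion nodes are the nodes with rule Un. Companion leaves of a companion node $m$: leaves that are strict descendants of $m$ with the same formula and $S_n\subseteq S_m$, excluding companion leaves of companion nodes strictly below $m$. For a child $n'$ of $n$: $s'<_{n',n}s$ iff $s'\in S_{n'}$, $s\in S_n$, and: rule $[K]$ with $s\xrightarrow{K}s'$; or rule $(\langle K\rangle,f)$ with $s'=f(s)$; or another rule with $s'=s$.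 $\lessdot_{n',n}$ is least with $s\lessdot_{n,n}s$ ($s\in S_n$) and: $s'\lessdot_{n',m}s''$, $s''<_{m,n}s$ imply $s'\lessdot_{n',n}s$. $<:_{n',n}$ and $<:_m$ ($m$ a companion node) are least with: $s'<:_m s$ iff some companion leaf $m'$ of $m$ has $s'\in S_{m'}$ and $s'<:_{m',m}s$; $s'<:_{n',n}s$ iff $s'\in S_{n'}$, $s\in S_n$, and either $s'\lessdot_{n',n}s$ or there are a companion node $m\notin\{n,n'\}$ and $t,t'\in S_m$ with $s'<:_{n',m}t'$, $t'(<:_m)^+t$, $t\lessdot_{m,n}s$. A leaf with sequent $S_n\vdash_\Delta\Phi$ is successful iff: $\Phi=Z\notin\mathrm{dom}(\Delta)$ and $S_n\subseteq\mathcal V(Z)$; or $\Phi=\neg Z$, $Z\notin\mathrm{dom}(\Delta)$, $S_n\cap\mathcal V(Z)=\emptyset$; or it is a $\nu$-leaf; or it is a $\mu$-leaf whose companion node $m$ has $<:_m$ well-founded. A tableau is successful iff all leaves are successful. *)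

(* Sets of states are predicates [St -> Prop]; subsets of Sigma
   are predicates [Sigma -> Prop]; Var := nat (a countably infinite set). *)
From Stdlib Require Import List Arith Relations Wellfounded.
Import ListNotations.

Set Implicit Arguments.

Definition var := nat.

Inductive form (Sigma : Type) : Type :=
| FVar : var -> form Sigma
| FNeg : form Sigma -> form Sigma
| FAnd : form Sigma -> form Sigma -> form Sigma
| FBox : (Sigma -> Prop) -> form Sigma -> form Sigma
| FNu  : var -> form Sigma -> form Sigma.
Arguments FVar {Sigma}.

(* substitution [Z := g] of free occurrences of Z (used only with
   g = ~Z, which is always capture free) *)
Fixpoint fsubst {Sigma} (Z : var) (g : form Sigma) (f : form Sigma) : form Sigma :=
  match f with
  | FVar Y => if Nat.eqb Y Z then g else FVar Y
  | FNeg h => FNeg (fsubst Z g h)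
  | FAnd h1 h2 => FAnd (fsubst Z g h1) (fsubst Z g h2)
  | FBox K h => FBox K (fsubst Z g h)
  | FNu Y h => if Nat.eqb Y Z then FNu Y h else FNu Y (fsubst Z g h)
  end.

Definition FOr {Sigma} (f g : form Sigma) := FNeg (FAnd (FNeg f) (FNeg g)).
Definition FDia {Sigma} (K : Sigma -> Prop) (f : form Sigma) := FNeg (FBox K (FNeg f)).
Definition FMu {Sigma} (Z : var) (f : form Sigma) :=
  FNeg (FNu Z (FNeg (fsubst Z (FNeg (FVar Z)) f))).

(* every free occurrence of Z in f lies under an even number of negations
   (the boolean [odd] records the parity of negations met so far) *)
Fixpoint occ_even {Sigma} (Z : var) (odd : bool) (f : form Sigma) : Prop :=
  match f with
  | FVar Y => Y = Z -> odd = false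
  | FNeg h => occ_even Z (negb odd) h
  | FAnd h1 h2 => occ_even Z odd h1 /\ occ_even Z odd h2
  | FBox _ h => occ_even Z odd h
  | FNu Y h => if Nat.eqb Y Z then True else occ_even Z odd h
  end.

Fixpoint well_formed {Sigma} (f : form Sigma) : Prop :=
  match f with
  | FVar _ => True
  | FNeg h => well_formed h
  | FAnd h1 h2 => well_formed h1 /\ well_formed h2
  | FBox _ h => well_formed h
  | FNu Z h => occ_even Z false h /\ well_formed h
  end.

Section Semantics.
Variables (Sigma St : Type) (trans : St -> Sigma -> St -> Prop).

Definition stepK (K : Sigma -> Prop) (s s' : St) : Prop :=
  exists a, K a /\ trans s a s'.

Definition upd (V : var -> St -> Prop) (Z : var) (X : St -> Prop) : var -> St -> Prop :=
  fun Y => if Nat.eqb Y Z then X else V Y.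

Fixpoint sem (V : var -> St -> Prop) (f : form Sigma) : St -> Prop :=
  match f with
  | FVar Z => V Z
  | FNeg h => fun s => ~ sem V h s
  | FAnd h1 h2 => fun s => sem V h1 s /\ sem V h2 s
  | FBox K h => fun s => forall s', stepK K s s' -> sem V h s'
  | FNu Z h => fun s => exists X : St -> Prop,
                 X s /\ (forall t, X t -> sem (upd V Z X) h t)
  end.
End Semantics.

Inductive pform (Sigma : Type) : Type :=
| PVar  : var -> pform Sigma
| PNVar : var -> pform Sigma
| PAnd  : pform Sigma -> pform Sigma -> pform Sigma
| POr   : pform Sigma -> pform Sigma -> pform Sigma
| PBox  : (Sigma -> Prop) -> pform Sigma -> pform Sigma
| PDia  : (Sigma -> Prop) -> pform Sigma -> pform Sigma
| PNu   : var -> pform Sigma -> pform Sigma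
| PMu   : var -> pform Sigma -> pform Sigma.
Arguments PVar {Sigma}.
Arguments PNVar {Sigma}.

Fixpoint toform {Sigma} (f : pform Sigma) : form Sigma :=
  match f with
  | PVar Z => FVar Z
  | PNVar Z => FNeg (FVar Z)
  | PAnd f g => FAnd (toform f) (toform g)
  | POr f g => FOr (toform f) (toform g)
  | PBox K f => FBox K (toform f)
  | PDia K f => FDia K (toform f)
  | PNu Z f => FNu Z (toform f)
  | PMu Z f => FMu Z (toform f)
  end.

(* Phi[Z := U]: replace free occurrences of Z by the variable U.  In every
   use (rule Un) U is not bound in Phi, so this is capture free. *)
Fixpoint psubst {Sigma} (Z U : var) (f : pform Sigma) : pform Sigma :=
  match f with
  | PVar Y => if Nat.eqb Y Z then PVar U else PVar Y
  | PNVar Y => if Nat.eqb Y Z then PNVar U else PNVar Y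
  | PAnd f g => PAnd (psubst Z U f) (psubst Z U g)
  | POr f g => POr (psubst Z U f) (psubst Z U g)
  | PBox K f => PBox K (psubst Z U f)
  | PDia K f => PDia K (psubst Z U f)
  | PNu Y f => if Nat.eqb Y Z then PNu Y f else PNu Y (psubst Z U f)
  | PMu Y f => if Nat.eqb Y Z then PMu Y f else PMu Y (psubst Z U f)
  end.

Fixpoint pfree {Sigma} (U : var) (f : pform Sigma) : Prop :=
  match f with
  | PVar Y | PNVar Y => Y = U
  | PAnd f g | POr f g => pfree U f \/ pfree U g
  | PBox _ f | PDia _ f => pfree U f
  | PNu Y f | PMu Y f => Y <> U /\ pfree U f
  end.

Fixpoint pnegfree {Sigma} (U : var) (f : pform Sigma) : Prop :=
  match f with
  | PVar _ => False
  | PNVar Y => Y = U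
  | PAnd f g | POr f g => pnegfree U f \/ pnegfree U g
  | PBox _ f | PDia _ f => pnegfree U f
  | PNu Y f | PMu Y f => Y <> U /\ pnegfree U f
  end.

Fixpoint pbound {Sigma} (U : var) (f : pform Sigma) : Prop :=
  match f with
  | PVar _ | PNVar _ => False
  | PAnd f g | POr f g => pbound U f \/ pbound U g
  | PBox _ f | PDia _ f => pbound U f
  | PNu Y f | PMu Y f => Y = U \/ pbound U f
  end.

Fixpoint pmentions {Sigma} (U : var) (f : pform Sigma) : Prop :=
  match f with
  | PVar Y | PNVar Y => Y = U
  | PAnd f g | POr f g => pmentions U f \/ pmentions U g
  | PBox _ f | PDia _ f => pmentions U f
  | PNu Y f | PMu Y f => Y = U \/ pmentions U f
  end.

Definition deflist (Sigma : Type) := list (var * pform Sigma).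

Definition dom {Sigma} (D : deflist Sigma) : list var := map fst D.

Fixpoint lookup {Sigma} (D : deflist Sigma) (U : var) : option (pform Sigma) :=
  match D with
  | [] => None
  | (Y, f) :: D' => if Nat.eqb Y U then Some f else lookup D' U
  end.

Definition valid_deflist {Sigma} (D : deflist Sigma) : Prop :=
  NoDup (dom D) /\
  (forall U f, In U (dom D) -> In f (map snd D) -> ~ pbound U f) /\
  (forall i j Ui fi Uj fj, i <= j ->
      nth_error D i = Some (Ui, fi) -> nth_error D j = Some (Uj, fj) ->
      ~ pfree Uj fi).

Record sequent (Sigma St : Type) := mkSeq {
  sS : St -> Prop;
  sD : deflist Sigma;
  sF : pform Sigma }.
Arguments mkSeq {Sigma St}.
Arguments sS {Sigma St}.
Arguments sD {Sigma St}.
Arguments sF {Sigma St}.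

Definition valid_seq {Sigma St} (q : sequent Sigma St) : Prop :=
  valid_deflist (sD q) /\
  (forall U, In U (dom (sD q)) -> ~ pnegfree U (sF q) /\ ~ pbound U (sF q)).

Definition subset {St} (A B : St -> Prop) := forall s, A s -> B s.
Definition seteq {St} (A B : St -> Prop) := forall s, A s <-> B s.

(* rule labels; [RDia f] carries the witness function, [RSig U] the fresh
   variable introduced by rule (sigma Z) *)
Inductive rule (St : Type) : Type :=
| RAnd | ROr | RBox | RDia (f : St -> St) | RSig (U : var) | RUn | RThin.
Arguments RAnd {St}. Arguments ROr {St}. Arguments RBox {St}.
Arguments RSig {St}. Arguments RUn {St}. Arguments RThin {St}.

Section Tableaux.
Variables (Sigma St : Type) (trans : St -> Sigma -> St -> Prop)
          (V : var -> St -> Prop).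

Notation seq := (sequent Sigma St).

Definition fresh (U : var) (D : deflist Sigma) (f : pform Sigma) : Prop :=
  ~ In U (dom D) /\ ~ pmentions U f /\ (forall g, In g (map snd D) -> ~ pmentions U g).

Definition instance (q : seq) (r : rule St) (ps : list seq) : Prop :=
  match r with
  | RAnd => exists f g q1 q2, sF q = PAnd f g /\ ps = [q1; q2] /\
      seteq (sS q1) (sS q) /\ sD q1 = sD q /\ sF q1 = f /\
      seteq (sS q2) (sS q) /\ sD q2 = sD q /\ sF q2 = g
  | ROr => exists f g q1 q2, sF q = POr f g /\ ps = [q1; q2] /\
      sD q1 = sD q /\ sF q1 = f /\ sD q2 = sD q /\ sF q2 = g /\
      seteq (sS q) (fun s => sS q1 s \/ sS q2 s)
  | RBox => exists K f q1, sF q = PBox K f /\ ps = [q1] /\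
      sD q1 = sD q /\ sF q1 = f /\
      seteq (sS q1) (fun s' => exists s, sS q s /\ stepK trans K s s')
  | RDia w => exists K f q1, sF q = PDia K f /\ ps = [q1] /\
      (forall s, sS q s -> stepK trans K s (w s)) /\
      sD q1 = sD q /\ sF q1 = f /\
      seteq (sS q1) (fun s' => exists s, sS q s /\ s' = w s)
  | RSig U => exists q1, ps = [q1] /\
      (exists Z f, sF q = PNu Z f \/ sF q = PMu Z f) /\
      fresh U (sD q) (sF q) /\
      seteq (sS q1) (sS q) /\ sD q1 = sD q ++ [(U, sF q)] /\ sF q1 = PVar U
  | RUn => exists U Z f q1, sF q = PVar U /\ ps = [q1] /\
      (lookup (sD q) U = Some (PNu Z f) \/ lookup (sD q) U = Some (PMu Z f)) /\
      seteq (sS q1) (sS q) /\ sD q1 = sD q /\ sF q1 = psubst Z U f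
  | RThin => exists q1, ps = [q1] /\
      subset (sS q) (sS q1) /\ sD q1 = sD q /\ sF q1 = sF q
  end.

Inductive tree : Type :=
| Leaf : seq -> tree
| Int  : seq -> rule St -> list tree -> tree.

Definition label (t : tree) : seq :=
  match t with Leaf q => q | Int q _ _ => q end.

Definition addr := list nat.

Fixpoint subtree (t : tree) (p : addr) : option tree :=
  match p with
  | [] => Some t
  | i :: p' =>
      match t with
      | Leaf _ => None
      | Int _ _ cs => match nth_error cs i with
                      | Some c => subtree c p'
                      | None => None
                      end
      end
  end.

Definition local_ok (t : tree) : Prop :=
  valid_seq (label t) /\
  match t with
  | Leaf _ => True
  | Int q r cs => instance q r (map label cs)
  end.

Variable tr : tree.

Definition node (p : addr) : Prop := subtree tr p <> None.
Definition seqAt (p : addr) : option seq := option_map label (subtree tr p).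
Definition SAt (p : addr) : St -> Prop :=
  fun s => match seqAt p with Some q => sS q s | None => False end.
Definition ruleAt (p : addr) : option (rule St) :=
  match subtree tr p with Some (Int _ r _) => Some r | _ => None end.
Definition fmAt (p : addr) : option (pform Sigma) := option_map sF (seqAt p).
Definition is_leaf (p : addr) : Prop := exists q, subtree tr p = Some (Leaf q).
Definition childOf (n' n : addr) : Prop := node n' /\ exists i, n' = n ++ [i].
Definition strict_anc (m n : addr) : Prop := node n /\ exists k, k <> [] /\ n = m ++ k.

Definition sigma_leaf (n : addr) : Prop :=
  exists q U, seqAt n = Some q /\ is_leaf n /\ sF q = PVar U /\ In U (dom (sD q)) /\
    exists m, strict_anc m n /\ fmAt m = Some (PVar U) /\ subset (SAt n) (SAt m).

Definition nu_leaf (n : addr) : Prop :=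
  sigma_leaf n /\ exists q U Z f, seqAt n = Some q /\ sF q = PVar U /\
    lookup (sD q) U = Some (PNu Z f).
Definition mu_leaf (n : addr) : Prop :=
  sigma_leaf n /\ exists q U Z f, seqAt n = Some q /\ sF q = PVar U /\
    lookup (sD q) U = Some (PMu Z f).

Definition terminal (n : addr) : Prop :=
  exists q, seqAt n = Some q /\
  ( (exists Z, (sF q = PVar Z \/ sF q = PNVar Z) /\ ~ In Z (dom (sD q)))
  \/ (exists K f, sF q = PDia K f /\
        exists s, sS q s /\ ~ exists s', stepK trans K s s')
  \/ sigma_leaf n ).

Definition tableau : Prop :=
  (forall p t, subtree tr p = Some t -> local_ok t) /\
  sD (label tr) = [] /\
  (forall n, is_leaf n -> terminal n).

Definition companion (m : addr) : Prop := ruleAt m = Some RUn.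

Definition cl_cond (m n : addr) : Prop :=
  companion m /\ is_leaf n /\ strict_anc m n /\ fmAt n = fmAt m /\
  subset (SAt n) (SAt m).

(* The recursion is on the (decreasing) distance
   between m and n; the fuel [k] (initially the depth of n) bounds it. *)
Fixpoint cleaf_fuel (k : nat) (m n : addr) : Prop :=
  match k with
  | 0 => False
  | S k' => cl_cond m n /\
      ~ (exists m', companion m' /\ strict_anc m m' /\ cleaf_fuel k' m' n)
  end.
Definition comp_leaf (m n : addr) : Prop := cleaf_fuel (length n) m n.

Definition lt_step (n' n : addr) (s' s : St) : Prop :=
  childOf n' n /\ SAt n' s' /\ SAt n s /\
  match ruleAt n, fmAt n with
  | Some RBox, Some (PBox K _) => stepK trans K s s'
  | Some (RDia w), _ => s' = w s
  | _, _ => s' = s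
  end.

Inductive trace : addr -> addr -> St -> St -> Prop :=
| trace_refl n s : SAt n s -> trace n n s s
| trace_step n' m n s' s'' s :
    trace n' m s' s'' -> lt_step m n s'' s -> trace n' n s' s.

Inductive extN : addr -> addr -> St -> St -> Prop :=
| extN_base n' n s' s :
    SAt n' s' -> SAt n s -> trace n' n s' s -> extN n' n s' s
| extN_comp n' n m s' s t t' :
    SAt n' s' -> SAt n s -> companion m -> m <> n -> m <> n' ->
    SAt m t -> SAt m t' ->
    extN n' m s' t' -> extP m t' t -> trace m n t s -> extN n' n s' s
with extM : addr -> St -> St -> Prop :=
| extM_intro m m' s' s :
    companion m -> comp_leaf m m' -> SAt m' s' -> extN m' m s' s -> extM m s' s
with extP : addr -> St -> St -> Prop :=
| extP_one m a b : extM m a b -> extP m a b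
| extP_trans m a b c : extM m a b -> extP m b c -> extP m a c.

Definition successful_leaf (n : addr) : Prop :=
  exists q, seqAt n = Some q /\
  ( (exists Z, sF q = PVar Z /\ ~ In Z (dom (sD q)) /\ subset (sS q) (V Z))
  \/ (exists Z, sF q = PNVar Z /\ ~ In Z (dom (sD q)) /\
        forall s, sS q s -> ~ V Z s)
  \/ nu_leaf n
  \/ (mu_leaf n /\ exists m, comp_leaf m n /\ well_founded (extM m)) ).

Definition successful_tableau : Prop :=
  tableau /\ forall n, is_leaf n -> successful_leaf n.

End Tableaux.

(* To make mu-unfoldings well founded, states are measured by signatures: for a
   definition list (U1 = sigma Z1.Phi1) ... (Un = sigma Zn.Phin), a signature gives each
   mu-constant an approximant of its least fixpoint and each nu-constant its value.  The
   approximants of a monotone map form a well-ordered chain, so signatures are well-ordered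
   lexicographically and every state satisfying a formula has a least signature under
   which it does.  The construction follows these least signatures: they choose the
   disjunct and the diamond witness, and at a fixpoint formula a fresh constant U is
   introduced and the node thinned to all states satisfying U, so that every later
   occurrence of U is a sigma-leaf below this companion.  Least signatures never increase
   along the tableau and strictly decrease at the unfolding of a mu-constant, hence the
   relation <:_m of a mu-companion m embeds into the lexicographic order and is well
   founded. *)

From Stdlib Require Import List Arith Lia Bool Wellfounded Classical
  FunctionalExtensionality PropExtensionality ClassicalEpsilon.
Import ListNotations.

Set Implicit Arguments.

Definition strict_subset {St} (X Y : St -> Prop) : Prop := subset X Y /\ X <> Y.

Lemma pred_ext {St} (X Y : St -> Prop) : (forall s, X s <-> Y s) -> X = Y.
Proof.
  intro H. apply functional_extensionality; intro s.
  apply propositional_extensionality; auto.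
Qed.

Lemma subset_antisym {St} (X Y : St -> Prop) : subset X Y -> subset Y X -> X = Y.
Proof. intros H1 H2. apply pred_ext; intro s; split; auto. Qed.

Lemma strict_subset_trans {St} (X Y Z : St -> Prop) :
  strict_subset X Y -> strict_subset Y Z -> strict_subset X Z.
Proof.
  intros [H1 H2] [H3 H4]. split; [intros s Hs; auto|].
  intro E; subst. apply H2. apply subset_antisym; auto.
Qed.

Lemma NoDup_app_disjoint {A : Type} (l1 l2 : list A) a :
  NoDup (l1 ++ l2) -> In a l1 -> ~ In a l2.
Proof.
  induction l1 as [|b l1 IH]; simpl; intros H1 H2; [tauto|]. inversion H1; subst.
  destruct H2 as [E|H2]; [subst|auto]. intro. apply H3. apply in_or_app; auto.
Qed.

Lemma firstn_length_eq {A : Type} (l : list A) n : length l = n -> firstn n l = l.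
Proof. intro; subst; apply firstn_all2; auto. Qed.

Section Completeness.
Variables (Sigma St : Type) (trans : St -> Sigma -> St -> Prop).
Implicit Types (W : var -> St -> Prop) (X : St -> Prop).

(** * Valuations and the semantics of positive formulas *)

Lemma upd_eq W Z X : upd W Z X Z = X.
Proof. unfold upd. rewrite Nat.eqb_refl. auto. Qed.

Lemma upd_neq W Z X Y : Y <> Z -> upd W Z X Y = W Y.
Proof. intro H. unfold upd. apply Nat.eqb_neq in H. rewrite H. auto. Qed.

Lemma upd_shadow W Z X X' : upd (upd W Z X) Z X' = upd W Z X'.
Proof.
  apply functional_extensionality; intro Y. unfold upd. destruct (Nat.eqb Y Z); auto.
Qed.

Lemma upd_comm W Z X Y X' : Z <> Y -> upd (upd W Z X) Y X' = upd (upd W Y X') Z X.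
Proof.
  intro H. apply functional_extensionality; intro v. unfold upd.
  destruct (Nat.eqb v Y) eqn:E1; destruct (Nat.eqb v Z) eqn:E2; auto.
  apply Nat.eqb_eq in E1; apply Nat.eqb_eq in E2; subst; congruence.
Qed.

Lemma upd_agree_on W1 W2 Y X (P : var -> Prop) :
  (forall v, P v -> Y <> v -> W1 v = W2 v) -> forall v, P v -> upd W1 Y X v = upd W2 Y X v.
Proof.
  intros H v Hv. destruct (Nat.eq_dec v Y).
  - subst; rewrite !upd_eq; auto.
  - rewrite !upd_neq; auto.
Qed.

Lemma upd_subset W1 W2 Y X :
  (forall v, subset (W1 v) (W2 v)) -> forall v, subset (upd W1 Y X v) (upd W2 Y X v).
Proof.
  intros H v. destruct (Nat.eq_dec v Y).
  - subst; rewrite !upd_eq; intros s; auto.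
  - rewrite !upd_neq; auto.
Qed.


Definition psem W (g : pform Sigma) : St -> Prop := sem trans W (toform g).

Lemma sem_fsubst_neg (h : form Sigma) : forall Z W X,
  sem trans (upd W Z X) (fsubst Z (FNeg (FVar Z)) h) = sem trans (upd W Z (fun s => ~ X s)) h.
Proof.
  induction h as [v|h IH|h1 IH1 h2 IH2|K h IH|v h IH]; intros Z W X; simpl.
  - destruct (Nat.eqb v Z) eqn:E; simpl.
    + apply Nat.eqb_eq in E; subst. rewrite !upd_eq. auto.
    + apply Nat.eqb_neq in E. rewrite !upd_neq; auto.
  - rewrite IH. auto.
  - rewrite IH1, IH2. auto.
  - apply functional_extensionality; intro s. rewrite IH. auto.
  - destruct (Nat.eqb v Z) eqn:E; simpl.
    + apply Nat.eqb_eq in E; subst. apply pred_ext; intro s.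
      split; intros [Y [H1 H2]]; exists Y; split; auto; intros t Ht; specialize (H2 t Ht);
        rewrite upd_shadow in *; auto.
    + apply Nat.eqb_neq in E. apply pred_ext; intro s.
      split; intros [Y [H1 H2]]; exists Y; split; auto; intros t Ht; specialize (H2 t Ht).
      * rewrite upd_comm, <- IH, <- upd_comm by auto. auto.
      * rewrite upd_comm, IH, <- upd_comm by auto. auto.
Qed.

Lemma psem_var W Z s : psem W (PVar Z) s <-> W Z s.
Proof. unfold psem; simpl; tauto. Qed.

Lemma psem_nvar W Z s : psem W (PNVar Z) s <-> ~ W Z s.
Proof. unfold psem; simpl; tauto. Qed.

Lemma psem_and W f g s : psem W (PAnd f g) s <-> psem W f s /\ psem W g s.
Proof. unfold psem; simpl; tauto. Qed.

Lemma psem_or W f g s : psem W (POr f g) s <-> psem W f s \/ psem W g s.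
Proof.
  unfold psem; simpl. split; intro H.
  - apply NNPP; intro H'; apply H; split; intro; apply H'; auto.
  - intros [H1 H2]; destruct H; auto.
Qed.

Lemma psem_box W K f s :
  psem W (PBox K f) s <-> forall s', stepK trans K s s' -> psem W f s'.
Proof. unfold psem; simpl; tauto. Qed.

Lemma psem_dia W K f s :
  psem W (PDia K f) s <-> exists s', stepK trans K s s' /\ psem W f s'.
Proof.
  unfold psem; simpl. split; intro H.
  - apply NNPP; intro H'; apply H; intros s' Hs Hf; apply H'; eauto.
  - destruct H as [s' [H1 H2]]; intro H; apply (H s'); auto.
Qed.

Lemma psem_nu W Z f s :
  psem W (PNu Z f) s <-> exists X, X s /\ forall t, X t -> psem (upd W Z X) f t.
Proof. unfold psem; simpl; tauto. Qed.

Lemma psem_mu W Z f s :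
  psem W (PMu Z f) s <-> forall Y : St -> Prop, (forall t, psem (upd W Z Y) f t -> Y t) -> Y s.
Proof.
  unfold psem; simpl. unfold FMu. simpl. split.
  - intros H Y HY. apply NNPP; intro Hs. apply H. exists (fun t => ~ Y t). split; auto.
    intros t Ht. rewrite sem_fsubst_neg. intro Hf. apply Ht. apply HY.
    replace (fun s0 => ~ ~ Y s0) with Y in Hf; auto.
    apply pred_ext; intro; split; intro; [intro; contradiction|apply NNPP; auto].
  - intros H [X [HX HX']].
    assert (Hp : ~ X s).
    { apply H. intros t Ht Hx. apply (HX' t Hx). rewrite sem_fsubst_neg. auto. }
    auto.
Qed.

Lemma psem_free_ext (g : pform Sigma) : forall W1 W2,
  (forall v, pfree v g -> W1 v = W2 v) -> forall s, psem W1 g s <-> psem W2 g s.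
Proof.
  induction g as [v|v|g1 IH1 g2 IH2|g1 IH1 g2 IH2|K g IH|K g IH|v g IH|v g IH];
    intros W1 W2 H s.
  - rewrite !psem_var, (H v); simpl; tauto.
  - rewrite !psem_nvar, (H v); simpl; tauto.
  - rewrite !psem_and, (IH1 W1 W2), (IH2 W1 W2); [tauto| |]; intros; apply H; simpl; auto.
  - rewrite !psem_or, (IH1 W1 W2), (IH2 W1 W2); [tauto| |]; intros; apply H; simpl; auto.
  - rewrite !psem_box. split; intros H1 s' Hs; [rewrite <- (IH W1 W2)|rewrite (IH W1 W2)]; auto.
  - rewrite !psem_dia. split; intros [s' [H1 H2]]; exists s'; split; auto;
      [rewrite <- (IH W1 W2)|rewrite (IH W1 W2)]; auto.
  - assert (E : forall X t, psem (upd W1 v X) g t <-> psem (upd W2 v X) g t).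
    { intros X t. apply IH. apply upd_agree_on with (P := fun v0 => pfree v0 g).
      intros v0 H1 H2. apply H. simpl. auto. }
    rewrite !psem_nu.
    split; intros [X [H1 H2]]; exists X; split; auto; intros t Ht; apply E; auto.
  - assert (E : forall X t, psem (upd W1 v X) g t <-> psem (upd W2 v X) g t).
    { intros X t. apply IH. apply upd_agree_on with (P := fun v0 => pfree v0 g).
      intros v0 H1 H2. apply H. simpl. auto. }
    rewrite !psem_mu.
    split; intros H1 Y HY; apply H1; intros t Ht; apply HY; apply E; auto.
Qed.

Lemma psem_psubst (g : pform Sigma) : forall Z U W, ~ pbound U g ->
  forall s, psem W (psubst Z U g) s <-> psem (upd W Z (W U)) g s.
Proof.
  induction g as [v|v|g1 IH1 g2 IH2|g1 IH1 g2 IH2|K g IH|K g IH|v g IH|v g IH];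
    intros Z U W Hb s; simpl in Hb; simpl.
  - destruct (Nat.eqb v Z) eqn:E.
    + apply Nat.eqb_eq in E; subst. rewrite !psem_var, upd_eq. tauto.
    + apply Nat.eqb_neq in E. rewrite !psem_var, upd_neq; auto. tauto.
  - destruct (Nat.eqb v Z) eqn:E.
    + apply Nat.eqb_eq in E; subst. rewrite !psem_nvar, upd_eq. tauto.
    + apply Nat.eqb_neq in E. rewrite !psem_nvar, upd_neq; auto. tauto.
  - rewrite !psem_and, IH1, IH2; tauto.
  - rewrite !psem_or, IH1, IH2; tauto.
  - rewrite !psem_box. split; intros H s' Hs; [rewrite <- IH|rewrite IH]; auto.
  - rewrite !psem_dia. split; intros [s' [H1 H2]]; exists s'; split; auto;
      [rewrite <- IH|rewrite IH]; auto.
  - destruct (Nat.eqb v Z) eqn:E.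
    + apply Nat.eqb_eq in E; subst. apply psem_free_ext.
      intros v0 [H1 H2]. rewrite upd_neq; auto.
    + apply Nat.eqb_neq in E.
      assert (Q : forall X t, psem (upd W v X) (psubst Z U g) t
                              <-> psem (upd (upd W Z (W U)) v X) g t).
      { intros X t. rewrite IH by tauto. rewrite upd_neq by (intro; subst; tauto).
        rewrite upd_comm by auto. tauto. }
      rewrite !psem_nu.
      split; intros [X [H1 H2]]; exists X; split; auto; intros t Ht; apply Q; auto.
  - destruct (Nat.eqb v Z) eqn:E.
    + apply Nat.eqb_eq in E; subst. apply psem_free_ext.
      intros v0 [H1 H2]. rewrite upd_neq; auto.
    + apply Nat.eqb_neq in E.
      assert (Q : forall X t, psem (upd W v X) (psubst Z U g) t
                              <-> psem (upd (upd W Z (W U)) v X) g t).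
      { intros X t. rewrite IH by tauto. rewrite upd_neq by (intro; subst; tauto).
        rewrite upd_comm by auto. tauto. }
      rewrite !psem_mu.
      split; intros H1 Y HY; apply H1; intros t Ht; apply HY; apply Q; auto.
Qed.

Lemma psem_monotone (g : pform Sigma) : forall W1 W2,
  (forall v, subset (W1 v) (W2 v)) -> (forall v, pnegfree v g -> W1 v = W2 v) ->
  subset (psem W1 g) (psem W2 g).
Proof.
  induction g as [v|v|g1 IH1 g2 IH2|g1 IH1 g2 IH2|K g IH|K g IH|v g IH|v g IH];
    intros W1 W2 Hle Heq s; simpl in Heq; unfold subset in Hle.
  - rewrite !psem_var. auto.
  - rewrite !psem_nvar. rewrite Heq; auto.
  - rewrite !psem_and. intros [H1 H2]; split; [eapply IH1|eapply IH2]; eauto.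
  - rewrite !psem_or. intros [H1|H2]; [left; eapply IH1|right; eapply IH2]; eauto.
  - rewrite !psem_box. intros H s' Hs; eapply IH; eauto.
  - rewrite !psem_dia. intros [s' [H1 H2]]; exists s'; split; auto; eapply IH; eauto.
  - rewrite !psem_nu. intros [X [H1 H2]]; exists X; split; auto; intros t Ht.
    apply (IH (upd W1 v X)); [apply upd_subset; exact Hle| |auto].
    apply upd_agree_on; intros v0 H0 H0'; apply Heq; auto.
  - rewrite !psem_mu. intros H Y HY. apply H. intros t Ht. apply HY.
    apply (IH (upd W1 v Y)); [apply upd_subset; exact Hle| |apply Ht].
    apply upd_agree_on; intros v0 H0 H0'; apply Heq; auto.
Qed.

Lemma psem_monotone_upd (g : pform Sigma) W Z X Y : ~ pnegfree Z g ->
  subset X Y -> subset (psem (upd W Z X) g) (psem (upd W Z Y) g).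
Proof.
  intros Hn HXY. apply psem_monotone.
  - intros v0. destruct (Nat.eq_dec v0 Z); [subst; rewrite !upd_eq|rewrite !upd_neq]; auto.
    intros s; auto.
  - intros v0 Hv. destruct (Nat.eq_dec v0 Z); [subst; tauto|rewrite !upd_neq]; auto.
Qed.


(** * Approximants of least fixpoints *)

Section Approximants.
Variable F : (St -> Prop) -> (St -> Prop).
Hypothesis F_mono : forall X Y, subset X Y -> subset (F X) (F Y).

(* The approximants of the least fixpoint of [F], without ordinals: the least family closed
   under [F] and under arbitrary unions (the empty union being the bottom). *)
Inductive approx : (St -> Prop) -> Prop :=
| approx_F X : approx X -> approx (F X)
| approx_sup (C : (St -> Prop) -> Prop) :
    (forall X, C X -> approx X) -> approx (fun s => exists X, C X /\ X s).

Lemma approx_inflationary X : approx X -> subset X (F X).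
Proof.
  induction 1 as [X _ IH|C _ IH].
  - apply F_mono; auto.
  - intros s [Y [HY Hs]]. apply (F_mono (X := Y)); [intros t Ht; exists Y; auto|].
    apply IH; auto.
Qed.

Lemma approx_below_prefixed P : subset (F P) P -> forall X, approx X -> subset X P.
Proof.
  intros HP X; induction 1 as [X _ IH|C _ IH].
  - intros s Hs. apply HP. eapply F_mono; eauto.
  - intros s [Y [HY Hs]]. eapply IH; eauto.
Qed.

(* The chain property, via extreme points as in the proof of the Bourbaki-Witt theorem. *)
Definition extreme (c : St -> Prop) : Prop :=
  forall x, approx x -> subset x c -> x <> c -> subset (F x) c.

Lemma extreme_compare c : approx c -> extreme c ->
  forall x, approx x -> subset x c \/ subset (F c) x.
Proof.
  intros Tc Ec x; induction 1 as [y Ty IH|C HC IH].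
  - destruct IH as [H|H].
    + destruct (classic (y = c)) as [E|E].
      * subst. right. intros s; auto.
      * left. apply Ec; auto.
    + right. intros s Hs. apply (approx_inflationary Ty). auto.
  - destruct (classic (exists y, C y /\ subset (F c) y)) as [[y [Hy Hs]]|N].
    + right. intros s H. exists y; auto.
    + left. intros s [y [Hy Hs]]. destruct (IH y Hy) as [H|H]; auto.
      exfalso; apply N; eauto.
Qed.

Lemma approx_extreme c : approx c -> extreme c.
Proof.
  induction 1 as [d Td IH|C HC IH].
  - intros x Tx Hx Hne. destruct (extreme_compare Td IH Tx) as [H|H].
    + destruct (classic (x = d)) as [E|E].
      * subst. intros s; auto.
      * intros s Hs. apply (approx_inflationary Td). apply (IH x Tx H E); auto.
    + exfalso; apply Hne. apply subset_antisym; auto.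
  - intros x Tx Hx Hne.
    destruct (classic (exists y, C y /\ ~ subset y x)) as [[y [Hy Hn]]|N].
    + destruct (extreme_compare (HC y Hy) (IH y Hy) Tx) as [H|H].
      * assert (x <> y) by (intro; subst; apply Hn; intros s; auto).
        intros s Hs. exists y. split; auto. apply (IH y Hy x Tx H H0); auto.
      * exfalso. apply Hn. intros s Hs. apply H. apply (approx_inflationary (HC y Hy)); auto.
    + exfalso. apply Hne. apply subset_antisym; [exact Hx|].
      intros s [y [Hy Hs]]. apply NNPP; intro Hs'.
      apply N. exists y. split; [auto|]. intro Hsub; apply Hs'; auto.
Qed.

Lemma approx_chain x y : approx x -> approx y -> subset x y \/ subset y x.
Proof.
  intros Tx Ty. destruct (extreme_compare Ty (approx_extreme Ty) Tx) as [H|H]; auto.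
  right. intros s Hs. apply H. apply (approx_inflationary Ty); auto.
Qed.

Definition approx_top : St -> Prop := fun s => exists X, approx X /\ X s.

Lemma approx_top_approx : approx approx_top.
Proof. apply approx_sup. auto. Qed.

Lemma approx_top_prefixed : subset (F approx_top) approx_top.
Proof. intros s Hs. exists (F approx_top). split; auto. apply approx_F, approx_top_approx. Qed.

Definition approx_below (Y X : St -> Prop) : Prop := approx Y /\ strict_subset Y X.

(* [L] below is the meet of all non-accessible approximants: it is itself non-accessible,
   yet everything strictly below it is accessible. *)
Lemma approx_below_wf : well_founded approx_below.
Proof.
  assert (HT : forall X, approx X -> Acc approx_below X).
  { intros X TX. apply NNPP; intro NA.
    set (B := fun Y => approx Y /\ ~ Acc approx_below Y).
    set (L := fun s => exists Y, (approx Y /\ forall Z, B Z -> subset Y Z) /\ Y s).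
    assert (TL : approx L) by (apply approx_sup; intros Y [HY _]; auto).
    assert (LB : forall Z, B Z -> subset L Z)
      by (intros Z HZ s [Y [[_ HY] Hs]]; apply (HY Z HZ); auto).
    assert (BL : B L).
    { destruct (classic (forall Z, B Z -> subset (F L) Z)) as [H|H].
      - assert (subset (F L) L)
          by (intros s Hs; exists (F L); split; [split; [apply approx_F; auto|auto]|auto]).
        assert (E : X = L).
        { apply subset_antisym; [apply approx_below_prefixed; auto|apply LB; split; auto]. }
        subst; split; auto.
      - apply not_all_ex_not in H. destruct H as [Z HZ].
        apply imply_to_and in HZ. destruct HZ as [BZ HZ].
        assert (TZ : approx Z) by (destruct BZ; auto).
        destruct (approx_chain (approx_F TL) TZ) as [H|H]; [contradiction|].
        destruct (classic (L = Z)) as [E|E]; [subst; auto|].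
        exfalso. apply HZ. apply (approx_extreme TZ); auto. }
    destruct BL as [_ BL]. apply BL. constructor. intros Y [TY [HY1 HY2]].
    apply NNPP; intro NY. apply HY2. apply subset_antisym; auto. apply LB. split; auto. }
  intros X. constructor. intros Y [TY _]. apply HT; auto.
Qed.

Lemma approx_succ X s : approx X -> X s -> (forall Y, approx_below Y X -> ~ Y s) ->
  exists P, approx_below P X /\ F P s.
Proof.
  intros TX Hs Hmin.
  set (P := fun t => exists Y, approx_below Y X /\ Y t).
  assert (TP : approx P) by (apply approx_sup; intros Y [HY _]; auto).
  assert (nP : ~ P s) by (intros [Y [HY HYs]]; apply (Hmin Y HY); auto).
  assert (PX : subset P X) by (intros t [Y [[_ [HY _]] Ht]]; auto).
  exists P. split; [split; [auto|split; auto]|].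
  { intro E; apply nP; rewrite E; auto. }
  destruct (approx_chain TX (approx_F TP)) as [H|H]; [apply H; auto|].
  destruct (classic (F P = X)) as [E|E]; [rewrite E; auto|].
  exfalso. apply nP.
  assert (FP : subset (F P) P).
  { intros t Ht. exists (F P). split; auto. split; [apply approx_F; auto|split; auto]. }
  apply (approx_below_prefixed FP TX); auto.
Qed.

End Approximants.

(** * Signatures *)

Notation signature := (list (St -> Prop)).

Definition body_fun W Z (f : pform Sigma) : (St -> Prop) -> (St -> Prop) :=
  fun X => psem (upd W Z X) f.

(* A signature [r] of a definition list [D] gives each constant of [D] a set: its value
   if it is not a mu-constant, some approximant of its value if it is.  With the exact
   values, [val_of W D r] would be the valuation [W[D]] of the paper. *)
Definition entry_ok W (g : pform Sigma) X : Prop :=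
  match g with
  | PMu Z f => approx (body_fun W Z f) X
  | _ => X = psem W g
  end.

Fixpoint admissible W (D : deflist Sigma) (r : signature) : Prop :=
  match D, r with
  | [], [] => True
  | (U, g) :: D', X :: r' => entry_ok W g X /\ admissible (upd W U X) D' r'
  | _, _ => False
  end.

Fixpoint val_of W (D : deflist Sigma) (r : signature) : var -> St -> Prop :=
  match D, r with
  | (U, g) :: D', X :: r' => val_of (upd W U X) D' r'
  | _, _ => W
  end.

Fixpoint lex_lt (D : deflist Sigma) (r1 r2 : signature) : Prop :=
  match D, r1, r2 with
  | _ :: D', X1 :: r1', X2 :: r2' => strict_subset X1 X2 \/ (X1 = X2 /\ lex_lt D' r1' r2')
  | _, _, _ => False
  end.

Definition lex_le D r1 r2 : Prop := lex_lt D r1 r2 \/ r1 = r2.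

Definition binder_positive (g : pform Sigma) : Prop :=
  match g with PMu Z f | PNu Z f => ~ pnegfree Z f | _ => True end.

Definition defs_positive (D : deflist Sigma) : Prop :=
  forall U g, In (U, g) D -> binder_positive g.

Lemma body_fun_mono W Z f : ~ pnegfree Z f ->
  forall X Y, subset X Y -> subset (body_fun W Z f X) (body_fun W Z f Y).
Proof. intros H X Y HXY. apply psem_monotone_upd; auto. Qed.

Lemma defs_positive_tl U g D : defs_positive ((U, g) :: D) -> defs_positive D.
Proof. intros H U' g' Hi. apply (H U'); simpl; auto. Qed.

Lemma defs_positive_app_l D1 D2 : defs_positive (D1 ++ D2) -> defs_positive D1.
Proof. intros H U g Hi. apply (H U); apply in_or_app; auto. Qed.

Lemma admissible_length W D r : admissible W D r -> length r = length D.
Proof.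
  revert W r; induction D as [|[U g] D IH]; intros W [|X r] H; simpl in *; try tauto.
  f_equal. eapply IH. apply H.
Qed.

Lemma lex_lt_trans D : forall r1 r2 r3, lex_lt D r1 r2 -> lex_lt D r2 r3 -> lex_lt D r1 r3.
Proof.
  induction D as [|d D IH]; intros [|X1 r1] [|X2 r2] [|X3 r3]; simpl; try tauto.
  intros [H1|[E1 H1]] [H2|[E2 H2]]; subst.
  - left; eapply strict_subset_trans; eauto.
  - left; auto.
  - left; auto.
  - right; split; auto. eapply IH; eauto.
Qed.

Lemma lex_lt_irrefl D : forall r, ~ lex_lt D r r.
Proof.
  induction D as [|d D IH]; intros [|X r]; simpl; try tauto.
  intros [[_ H]|[_ H]]; [auto|eapply IH; eauto].
Qed.

Lemma lex_le_trans D r1 r2 r3 : lex_le D r1 r2 -> lex_le D r2 r3 -> lex_le D r1 r3.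
Proof.
  intros [H1|H1] [H2|H2]; subst; unfold lex_le; auto. left; eapply lex_lt_trans; eauto.
Qed.

Lemma lex_le_lt_trans D r1 r2 r3 : lex_le D r1 r2 -> lex_lt D r2 r3 -> lex_lt D r1 r3.
Proof. intros [H1|H1] H2; subst; auto. eapply lex_lt_trans; eauto. Qed.

Lemma entry_ok_compare W g X1 X2 : binder_positive g ->
  entry_ok W g X1 -> entry_ok W g X2 ->
  X1 = X2 \/ strict_subset X1 X2 \/ strict_subset X2 X1.
Proof.
  intros Hpos E1 E2. destruct (classic (X1 = X2)) as [E|E]; [auto|right].
  destruct g; unfold entry_ok in E1, E2; try (subst; tauto).
  destruct (approx_chain (body_fun_mono W v g Hpos) E1 E2) as [S|S].
  - left; split; auto.
  - right; split; auto.
Qed.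

Lemma lex_lt_total D : forall W r1 r2, defs_positive D ->
  admissible W D r1 -> admissible W D r2 ->
  lex_lt D r1 r2 \/ r1 = r2 \/ lex_lt D r2 r1.
Proof.
  induction D as [|[U g] D IH]; intros W [|X1 r1] [|X2 r2] Hok H1 H2; simpl in *; try tauto.
  destruct H1 as [E1 H1], H2 as [E2 H2].
  destruct (@entry_ok_compare W g X1 X2 (Hok U g (or_introl eq_refl)) E1 E2) as [E|[C|C]].
  - subst X2. destruct (IH (upd W U X1) r1 r2 (defs_positive_tl Hok) H1 H2) as [L|[L|L]].
    + left; right; auto.
    + subst; auto.
    + right; right; right; auto.
  - left; left; auto.
  - right; right; left; auto.
Qed.

Definition lex_lt_adm W D (r1 r2 : signature) : Prop := admissible W D r1 /\ lex_lt D r1 r2.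

Lemma entry_below_wf W g : binder_positive g ->
  well_founded (fun Y X => entry_ok W g Y /\ strict_subset Y X).
Proof.
  intro Hpos. destruct g; unfold entry_ok;
    try (intros X; constructor; intros Y [E _]; constructor;
         intros Y' [E' [_ N]]; subst; tauto).
  apply (wf_incl _ _ (approx_below (body_fun W v g))); [intros Y X H; auto|].
  apply approx_below_wf. apply body_fun_mono. exact Hpos.
Qed.

Lemma lex_lt_adm_wf D : forall W, defs_positive D -> well_founded (lex_lt_adm W D).
Proof.
  induction D as [|[U g] D IH]; intros W Hok.
  - intros r. constructor. intros r' [_ H]. destruct r'; simpl in H; tauto.
  - assert (WX := entry_below_wf W g (Hok U g (or_introl eq_refl))).
    assert (K : forall X, Acc (fun Y X => entry_ok W g Y /\ strict_subset Y X) X ->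
                forall r', Acc (lex_lt_adm (upd W U X) D) r' ->
                Acc (lex_lt_adm W ((U, g) :: D)) (X :: r')).
    { intros X AX. induction AX as [X _ IHX]. intros r' Ar'. induction Ar' as [r' _ IHr].
      constructor. intros [|X1 r1] [Ha Hl]; simpl in Ha; [tauto|].
      destruct Ha as [Ea Ha]. simpl in Hl. destruct Hl as [Hl|[El Hl]].
      + apply IHX; [split; auto|]. apply IH. eapply defs_positive_tl; eauto.
      + subst X1. apply IHr. split; auto. }
    intros [|X r].
    + constructor. intros [|X1 r1] [_ H]; simpl in H; tauto.
    + apply K; auto. apply IH. eapply defs_positive_tl; eauto.
Qed.

Definition sat_sig W D g s : Prop := exists r, admissible W D r /\ psem (val_of W D r) g s.

Definition least_sig W D g s r : Prop :=
  admissible W D r /\ psem (val_of W D r) g s /\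
  forall r', admissible W D r' -> psem (val_of W D r') g s -> lex_le D r r'.

Lemma least_sig_exists W D g s : defs_positive D -> sat_sig W D g s ->
  exists r, least_sig W D g s r.
Proof.
  intros Hok [r0 [A0 P0]]. apply NNPP; intro N.
  assert (K : forall r, Acc (lex_lt_adm W D) r -> ~ (admissible W D r /\ psem (val_of W D r) g s)).
  { intros r Ar. induction Ar as [r _ IH]. intros [Ar Pr].
    apply N. exists r. split; auto. split; auto. intros r' Ar' Pr'.
    apply NNPP; intro Nle.
    destruct (lex_lt_total W r r' Hok Ar Ar') as [L|[L|L]].
    - apply Nle; left; auto.
    - apply Nle; right; auto.
    - apply (IH r'); [split; auto|auto]. }
  apply (K r0 (lex_lt_adm_wf W Hok r0)); auto.
Qed.

(* Arbitrary when [s] satisfies [g] under no signature. *)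
Definition rank W D g s : signature := epsilon (inhabits []) (least_sig W D g s).

Lemma rank_spec W D g s : defs_positive D -> sat_sig W D g s -> least_sig W D g s (rank W D g s).
Proof. intros Hok HC. unfold rank. apply epsilon_spec. apply least_sig_exists; auto. Qed.

Lemma admissible_app_inv D1 : forall W D2 r, admissible W (D1 ++ D2) r ->
  admissible W D1 (firstn (length D1) r) /\
  admissible (val_of W D1 (firstn (length D1) r)) D2 (skipn (length D1) r).
Proof.
  induction D1 as [|[U g] D1 IH]; intros W D2 r H; simpl in *; auto.
  destruct r as [|X r]; [tauto|]. simpl. destruct H as [E H].
  destruct (IH _ _ _ H). auto.
Qed.

Lemma admissible_app D1 : forall W D2 r1 r2, admissible W D1 r1 ->
  admissible (val_of W D1 r1) D2 r2 -> admissible W (D1 ++ D2) (r1 ++ r2).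
Proof.
  induction D1 as [|[U g] D1 IH]; intros W D2 [|X r1] r2 H1 H2; simpl in *; try tauto.
  destruct H1; split; auto.
Qed.

Lemma val_of_app D1 : forall W D2 r1 r2, length r1 = length D1 ->
  val_of W (D1 ++ D2) (r1 ++ r2) = val_of (val_of W D1 r1) D2 r2.
Proof.
  induction D1 as [|[U g] D1 IH]; intros W D2 [|X r1] r2 H; simpl in *; try discriminate; auto.
Qed.

Lemma val_of_notin D : forall W r v, ~ In v (dom D) -> val_of W D r v = W v.
Proof.
  induction D as [|[U g] D IH]; intros W [|X r] v H; simpl in *; auto.
  rewrite IH by tauto. rewrite upd_neq; auto.
Qed.

Lemma lex_le_firstn D1 : forall D2 r1 r2, lex_le (D1 ++ D2) r1 r2 ->
  lex_le D1 (firstn (length D1) r1) (firstn (length D1) r2).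
Proof.
  induction D1 as [|d D1 IH]; intros D2 r1 r2 H; simpl; [right; auto|].
  destruct H as [H|H]; [|subst; right; auto].
  destruct r1 as [|X1 r1]; destruct r2 as [|X2 r2]; simpl in H; try tauto.
  simpl. destruct H as [H|[E H]].
  - left; left; auto.
  - subst X2. destruct (IH D2 r1 r2 (or_introl H)) as [L|L].
    + left; right; auto.
    + right; rewrite L; auto.
Qed.

Lemma lex_le_cut D1 D2 r1 r2 :
  lex_le (D1 ++ D2) (firstn (length (D1 ++ D2)) r1) r2 ->
  lex_le D1 (firstn (length D1) r1) (firstn (length D1) r2).
Proof.
  intro L. apply lex_le_firstn in L. rewrite firstn_firstn, length_app in L.
  replace (Init.Nat.min (length D1) (length D1 + length D2)) with (length D1) in L by lia.
  exact L.
Qed.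

Lemma lex_lt_mid D1 : forall d D2 r0 X Y ra rb, length r0 = length D1 ->
  strict_subset X Y -> lex_lt (D1 ++ d :: D2) (r0 ++ X :: ra) (r0 ++ Y :: rb).
Proof.
  induction D1 as [|d' D1 IH]; intros d D2 [|Z r0] X Y ra rb Hl Hs; simpl in *;
    try discriminate; auto.
Qed.

(** * Syntax *)

Fixpoint binders_positive (f : pform Sigma) : Prop :=
  match f with
  | PVar _ | PNVar _ => True
  | PAnd f g | POr f g => binders_positive f /\ binders_positive g
  | PBox _ f | PDia _ f => binders_positive f
  | PNu Z f | PMu Z f => ~ pnegfree Z f /\ binders_positive f
  end.

Fixpoint psize (f : pform Sigma) : nat :=
  match f with
  | PVar _ | PNVar _ => 1
  | PAnd f g | POr f g => S (psize f + psize g)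
  | PBox _ f | PDia _ f | PNu _ f | PMu _ f => S (psize f)
  end.

Fixpoint maxvar (f : pform Sigma) : nat :=
  match f with
  | PVar Y | PNVar Y => Y
  | PAnd f g | POr f g => max (maxvar f) (maxvar g)
  | PBox _ f | PDia _ f => maxvar f
  | PNu Y f | PMu Y f => max Y (maxvar f)
  end.

Definition maxvar_defs (D : deflist Sigma) : nat :=
  fold_right (fun p m => max (max (fst p) (maxvar (snd p))) m) 0 D.

Definition fresh_var (D : deflist Sigma) (f : pform Sigma) : var :=
  S (max (maxvar_defs D) (maxvar f)).

Lemma pmentions_le_maxvar U (f : pform Sigma) : pmentions U f -> U <= maxvar f.
Proof.
  induction f; simpl; intros; try lia; try (destruct H; [subst|]; lia);
    try (destruct H; [apply IHf1 in H|apply IHf2 in H]; lia); auto.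
  - destruct H; [lia|apply IHf in H; lia].
  - destruct H; [lia|apply IHf in H; lia].
Qed.

Lemma maxvar_defs_in (D : deflist Sigma) U g :
  In (U, g) D -> U <= maxvar_defs D /\ maxvar g <= maxvar_defs D.
Proof.
  induction D as [|[U' g'] D IH]; simpl; [tauto|]. intros [E|H].
  - inversion E; subst; lia.
  - apply IH in H; lia.
Qed.

Lemma in_dom_iff (D : deflist Sigma) U : In U (dom D) <-> exists g, In (U, g) D.
Proof.
  unfold dom. rewrite in_map_iff. split.
  - intros [[a b] [E H]]; simpl in E; subst; eauto.
  - intros [g H]; exists (U, g); auto.
Qed.

Lemma in_rhs_iff (D : deflist Sigma) g : In g (map snd D) <-> exists U, In (U, g) D.
Proof.
  rewrite in_map_iff. split.
  - intros [[a b] [E H]]; simpl in E; subst; eauto.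
  - intros [U H]; exists (U, g); auto.
Qed.

Lemma fresh_var_fresh (D : deflist Sigma) (f : pform Sigma) : fresh (fresh_var D f) D f.
Proof.
  unfold fresh, fresh_var. split; [|split].
  - intro H. apply in_dom_iff in H. destruct H as [g H]. apply maxvar_defs_in in H. lia.
  - intro H. apply pmentions_le_maxvar in H. lia.
  - intros g Hg H. apply in_rhs_iff in Hg. destruct Hg as [U Hg].
    apply maxvar_defs_in in Hg. apply pmentions_le_maxvar in H. lia.
Qed.

Lemma pfree_pmentions U (f : pform Sigma) : pfree U f -> pmentions U f.
Proof. induction f; simpl; tauto. Qed.

Lemma pbound_pmentions U (f : pform Sigma) : pbound U f -> pmentions U f.
Proof. induction f; simpl; tauto. Qed.

Lemma pnegfree_pfree U (f : pform Sigma) : pnegfree U f -> pfree U f.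
Proof. induction f; simpl; tauto. Qed.

Lemma psize_pos (f : pform Sigma) : 1 <= psize f.
Proof. destruct f; simpl; lia. Qed.

Lemma psize_psubst Z U (g : pform Sigma) : psize (psubst Z U g) = psize g.
Proof. induction g; simpl; try destruct (Nat.eqb v Z); simpl; auto. Qed.

Lemma pbound_psubst Z U w (g : pform Sigma) : pbound w (psubst Z U g) <-> pbound w g.
Proof. induction g; simpl; try destruct (Nat.eqb v Z); simpl; try tauto. Qed.

Lemma pnegfree_psubst Z U w (g : pform Sigma) : pnegfree w (psubst Z U g) ->
  (w <> Z /\ pnegfree w g) \/ (w = U /\ pnegfree Z g).
Proof.
  induction g as [v|v|g1 IH1 g2 IH2|g1 IH1 g2 IH2|K g IH|K g IH|v g IH|v g IH];
    simpl; try tauto.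
  - destruct (Nat.eqb v Z) eqn:E; simpl; intro H; tauto.
  - destruct (Nat.eqb v Z) eqn:E; simpl; intro H.
    + apply Nat.eqb_eq in E; subst. auto.
    + apply Nat.eqb_neq in E; subst. left; split; auto.
  - destruct (Nat.eqb v Z) eqn:E; simpl; intros [H1 H2].
    + apply Nat.eqb_eq in E; subst. left; split; auto.
    + apply Nat.eqb_neq in E.
      destruct (IH H2) as [[A B]|[A B]]; [left|right]; repeat split; auto; congruence.
  - destruct (Nat.eqb v Z) eqn:E; simpl; intros [H1 H2].
    + apply Nat.eqb_eq in E; subst. left; split; auto.
    + apply Nat.eqb_neq in E.
      destruct (IH H2) as [[A B]|[A B]]; [left|right]; repeat split; auto; congruence.
Qed.

Lemma binders_positive_psubst Z U (g : pform Sigma) : ~ pbound U g ->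
  binders_positive g -> binders_positive (psubst Z U g).
Proof.
  induction g; simpl; intros Hb Hw; try tauto; try (destruct (Nat.eqb v Z); simpl; tauto);
    destruct (Nat.eqb v Z) eqn:E; simpl; try tauto; apply Nat.eqb_neq in E;
    (split; [|tauto]); intro H; apply pnegfree_psubst in H; destruct H as [[_ H]|[H _]]; tauto.
Qed.

Lemma occ_even_fsubst_other Y Z (h : form Sigma) : Y <> Z -> forall b,
  occ_even Z b (fsubst Y (FNeg (FVar Y)) h) <-> occ_even Z b h.
Proof.
  intro HYZ; induction h; intro b; simpl.
  - destruct (Nat.eqb v Y) eqn:E; simpl; [apply Nat.eqb_eq in E; subst|]; tauto.
  - apply IHh.
  - rewrite IHh1, IHh2; tauto.
  - apply IHh.
  - destruct (Nat.eqb v Y); simpl; [tauto|]. destruct (Nat.eqb v Z); [tauto|apply IHh].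
Qed.

Lemma occ_even_fsubst_self Z (h : form Sigma) : forall b,
  occ_even Z b (fsubst Z (FNeg (FVar Z)) h) <-> occ_even Z (negb b) h.
Proof.
  induction h; intro b; simpl.
  - destruct (Nat.eqb v Z) eqn:E; simpl.
    + apply Nat.eqb_eq in E; subst. tauto.
    + apply Nat.eqb_neq in E. split; intros _ H; congruence.
  - apply IHh.
  - rewrite IHh1, IHh2; tauto.
  - apply IHh.
  - destruct (Nat.eqb v Z) eqn:E; simpl; rewrite E; [tauto|apply IHh].
Qed.

Lemma well_formed_fsubst Z (h : form Sigma) :
  well_formed (fsubst Z (FNeg (FVar Z)) h) -> well_formed h.
Proof.
  induction h; simpl; auto; try tauto.
  destruct (Nat.eqb v Z) eqn:E; simpl; [tauto|]. apply Nat.eqb_neq in E.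
  intros [H1 H2]; split; auto. rewrite <- occ_even_fsubst_other; eauto.
Qed.

Lemma occ_even_pnegfree Z (f : pform Sigma) : forall b,
  occ_even Z b (toform f) -> pnegfree Z f -> b = true.
Proof.
  induction f; intros b Ho Hn; simpl in *; try tauto.
  - destruct b; auto. simpl in Ho. specialize (Ho Hn). discriminate.
  - destruct Hn; [apply IHf1|apply IHf2]; tauto.
  - rewrite negb_involutive in Ho. destruct Hn; [apply IHf1|apply IHf2]; tauto.
  - apply IHf; tauto.
  - rewrite negb_involutive in Ho. apply IHf; tauto.
  - destruct Hn as [H1 H2]. destruct (Nat.eqb v Z) eqn:E; [apply Nat.eqb_eq in E; congruence|].
    apply IHf; auto.
  - destruct Hn as [H1 H2]. destruct (Nat.eqb v Z) eqn:E; [apply Nat.eqb_eq in E; congruence|].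
    rewrite negb_involutive in Ho. rewrite occ_even_fsubst_other in Ho by auto. apply IHf; auto.
Qed.

Lemma well_formed_binders_positive (f : pform Sigma) :
  well_formed (toform f) -> binders_positive f.
Proof.
  induction f; simpl; auto; try tauto.
  - intros [H1 H2]. split; auto. intro H. apply (occ_even_pnegfree _ _ _ H1) in H. discriminate.
  - intros [H1 H2]. rewrite occ_even_fsubst_self in H1. simpl in H1. split.
    + intro H. apply (occ_even_pnegfree _ _ _ H1) in H. discriminate.
    + apply IHf. eapply well_formed_fsubst; eauto.
Qed.

(** * Definition lists and least signatures *)

Lemma dom_app (D1 D2 : deflist Sigma) : dom (D1 ++ D2) = dom D1 ++ dom D2.
Proof. unfold dom; apply map_app. Qed.

Lemma lookup_in (D : deflist Sigma) U g : lookup D U = Some g -> In U (dom D).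
Proof.
  induction D as [|[U' g'] D IH]; simpl; [discriminate|].
  destruct (Nat.eqb U' U) eqn:E; [apply Nat.eqb_eq in E; auto|]. intro H; right; auto.
Qed.

Lemma lookup_app (D1 D2 : deflist Sigma) U : In U (dom D1) -> lookup (D1 ++ D2) U = lookup D1 U.
Proof.
  induction D1 as [|[U' g'] D IH]; simpl; [tauto|].
  destruct (Nat.eqb U' U) eqn:E; auto. apply Nat.eqb_neq in E. intros [H|H]; [congruence|auto].
Qed.

Lemma lookup_last (D : deflist Sigma) U f : ~ In U (dom D) -> lookup (D ++ [(U, f)]) U = Some f.
Proof.
  induction D as [|[U' g'] D IH]; simpl; [rewrite Nat.eqb_refl; auto|].
  intro H. destruct (Nat.eqb U' U) eqn:E; [apply Nat.eqb_eq in E; tauto|]. apply IH; tauto.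
Qed.

Definition is_fixpoint (f : pform Sigma) : Prop := exists Z g, f = PNu Z g \/ f = PMu Z g.

Variable V : var -> St -> Prop.

Lemma val_of_restrict (D1 E : deflist Sigma) r U :
  admissible V (D1 ++ E) r -> ~ In U (dom E) ->
  val_of V (D1 ++ E) r U = val_of V D1 (firstn (length D1) r) U.
Proof.
  intros Ha Hn. destruct (admissible_app_inv _ _ _ _ Ha) as [H1 H2].
  rewrite <- (firstn_skipn (length D1) r) at 1.
  rewrite val_of_app by (apply admissible_length in H1; auto).
  apply val_of_notin; auto.
Qed.

Lemma rank_restrict (D1 E : deflist Sigma) U s :
  defs_positive (D1 ++ E) -> NoDup (dom (D1 ++ E)) -> In U (dom D1) ->
  sat_sig V (D1 ++ E) (PVar U) s ->
  sat_sig V D1 (PVar U) s /\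
  lex_le D1 (rank V D1 (PVar U) s) (firstn (length D1) (rank V (D1 ++ E) (PVar U) s)).
Proof.
  intros Hok Hnd Hin HC.
  destruct (rank_spec Hok HC) as [Ha [Hp _]].
  destruct (admissible_app_inv _ _ _ _ Ha) as [A1 _].
  assert (P1 : psem (val_of V D1 (firstn (length D1) (rank V (D1 ++ E) (PVar U) s))) (PVar U) s).
  { rewrite psem_var in *. rewrite <- (val_of_restrict D1 E); auto.
    rewrite dom_app in Hnd. eapply NoDup_app_disjoint; eauto. }
  assert (HC1 : sat_sig V D1 (PVar U) s) by (eexists; eauto).
  split; auto.
  destruct (rank_spec (defs_positive_app_l D1 E Hok) HC1) as [_ [_ L]]. apply L; auto.
Qed.

Lemma admissible_snoc_inv (D : deflist Sigma) U f r : admissible V (D ++ [(U, f)]) r ->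
  exists r0 X, r = r0 ++ [X] /\ admissible V D r0 /\ entry_ok (val_of V D r0) f X /\
  val_of V (D ++ [(U, f)]) r = upd (val_of V D r0) U X.
Proof.
  intro Ha. destruct (admissible_app_inv _ _ _ _ Ha) as [H1 H2].
  assert (Hl := admissible_length _ _ _ Ha). rewrite length_app in Hl; simpl in Hl.
  remember (skipn (length D) r) as rr. destruct rr as [|X [|Y rr]]; simpl in H2; try tauto.
  exists (firstn (length D) r), X. destruct H2 as [H2 _].
  assert (E : r = firstn (length D) r ++ [X]) by (rewrite Heqrr; symmetry; apply firstn_skipn).
  repeat split; auto.
  rewrite E at 1. rewrite val_of_app by (apply admissible_length in H1; auto). auto.
Qed.

(* The new entry is the value of a nu-formula, resp. the union of all approximants of a
   mu-formula. *)
Lemma sat_sig_snoc (D : deflist Sigma) U f s r : is_fixpoint f -> binder_positive f ->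
  admissible V D r -> psem (val_of V D r) f s ->
  exists X, admissible V (D ++ [(U, f)]) (r ++ [X]) /\
            psem (val_of V (D ++ [(U, f)]) (r ++ [X])) (PVar U) s.
Proof.
  intros [Z [g [Ef|Ef]]] Hpos Ha Hp; subst f.
  - exists (psem (val_of V D r) (PNu Z g)). split.
    + apply admissible_app; auto. simpl. split; auto.
    + rewrite val_of_app by (eapply admissible_length; eauto). simpl.
      rewrite psem_var, upd_eq. auto.
  - exists (approx_top (body_fun (val_of V D r) Z g)). split.
    + apply admissible_app; auto. simpl. split; auto. apply approx_top_approx.
    + rewrite val_of_app by (eapply admissible_length; eauto). simpl.
      rewrite psem_var, upd_eq. rewrite psem_mu in Hp. apply Hp. intros t Ht.
      apply (approx_top_prefixed (body_fun (val_of V D r) Z g)). exact Ht.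
Qed.


Lemma rank_snoc (D : deflist Sigma) U f s : is_fixpoint f -> defs_positive (D ++ [(U, f)]) ->
  sat_sig V D f s ->
  sat_sig V (D ++ [(U, f)]) (PVar U) s /\
  lex_le D (firstn (length D) (rank V (D ++ [(U, f)]) (PVar U) s)) (rank V D f s).
Proof.
  intros Hs Hok HC.
  destruct (rank_spec (defs_positive_app_l D _ Hok) HC) as [Ha [Hp _]].
  assert (Hpos : binder_positive f) by (apply (Hok U); apply in_or_app; simpl; auto).
  destruct (@sat_sig_snoc D U f s _ Hs Hpos Ha Hp) as [X [A1 P1]].
  assert (HC1 : sat_sig V (D ++ [(U, f)]) (PVar U) s) by (eexists; eauto).
  split; auto.
  destruct (rank_spec Hok HC1) as [_ [_ L]]. specialize (L _ A1 P1).
  apply lex_le_firstn in L. rewrite firstn_app in L.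
  rewrite (firstn_length_eq (rank V D f s)) in L by (eapply admissible_length; eauto).
  rewrite (admissible_length _ _ _ Ha), Nat.sub_diag, app_nil_r in L. auto.
Qed.

Lemma psem_upd_fresh W U Z g X s : ~ pmentions U g ->
  psem (upd (upd W U X) Z X) g s <-> psem (upd W Z X) g s.
Proof.
  intro Hm. apply psem_free_ext. intros v Hv. unfold upd.
  destruct (Nat.eqb v Z) eqn:E1; auto. destruct (Nat.eqb v U) eqn:E2; auto.
  apply Nat.eqb_eq in E2; subst; exfalso; apply Hm; apply pfree_pmentions; auto.
Qed.

Lemma sat_unfold_nu (D : deflist Sigma) U Z g s r : ~ pmentions U g -> ~ pnegfree Z g ->
  admissible V (D ++ [(U, PNu Z g)]) r -> psem (val_of V (D ++ [(U, PNu Z g)]) r) (PVar U) s ->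
  psem (val_of V (D ++ [(U, PNu Z g)]) r) (psubst Z U g) s.
Proof.
  intros Hm Hpos Ha Hp. destruct (admissible_snoc_inv _ _ _ _ Ha) as [r0 [X [Er [A0 [Ee Ev]]]]].
  rewrite Ev in *. rewrite psem_var, upd_eq in Hp. simpl in Ee. subst X.
  rewrite psem_psubst by (intro; apply Hm; apply pbound_pmentions; auto).
  rewrite upd_eq, psem_upd_fresh by auto.
  set (W0 := val_of V D r0) in *.
  assert (Hp' := Hp). rewrite psem_nu in Hp'. destruct Hp' as [Y [HY1 HY2]].
  apply (psem_monotone_upd g W0 Z (X := Y) Hpos); auto.
  intros t Ht. rewrite psem_nu. exists Y; auto.
Qed.

(* Unfolding a mu-constant at its least signature moves to a strictly smaller approximant,
   namely the one whose [F]-image first contains the state. *)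
Lemma sat_unfold_mu (D : deflist Sigma) U Z g s r : ~ pmentions U g -> ~ pnegfree Z g ->
  least_sig V (D ++ [(U, PMu Z g)]) (PVar U) s r ->
  exists r', admissible V (D ++ [(U, PMu Z g)]) r' /\ lex_lt (D ++ [(U, PMu Z g)]) r' r /\
    psem (val_of V (D ++ [(U, PMu Z g)]) r') (psubst Z U g) s.
Proof.
  intros Hm Hpos [Ha [Hp Hl]].
  destruct (admissible_snoc_inv _ _ _ _ Ha) as [r0 [X [Er [A0 [Ee Ev]]]]].
  rewrite Ev in Hp. rewrite psem_var, upd_eq in Hp. simpl in Ee.
  assert (Hlen : length r0 = length D) by (eapply admissible_length; eauto).
  set (W0 := val_of V D r0) in *.
  assert (Hmin : forall Y, approx_below (body_fun W0 Z g) Y X -> ~ Y s).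
  { intros Y [TY HY] HYs.
    assert (AY : admissible V (D ++ [(U, PMu Z g)]) (r0 ++ [Y]))
      by (apply admissible_app; auto; simpl; auto).
    assert (PY : psem (val_of V (D ++ [(U, PMu Z g)]) (r0 ++ [Y])) (PVar U) s).
    { rewrite val_of_app by auto. simpl. rewrite psem_var, upd_eq. auto. }
    apply (lex_lt_irrefl (D ++ [(U, PMu Z g)]) r).
    eapply lex_le_lt_trans; [apply (Hl _ AY PY)|]. rewrite Er. apply lex_lt_mid; auto. }
  destruct (approx_succ (body_fun_mono W0 Z g Hpos) Ee Hp Hmin) as [P [[TP SP] FP]].
  exists (r0 ++ [P]). split; [|split].
  - apply admissible_app; auto; simpl; auto.
  - rewrite Er. apply lex_lt_mid; auto.
  - rewrite val_of_app by auto. simpl.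
    rewrite psem_psubst by (intro; apply Hm; apply pbound_pmentions; auto).
    rewrite upd_eq, psem_upd_fresh by auto. exact FP.
Qed.

(** * The tableau construction *)

Notation tree := (tree Sigma St).
Implicit Types (t : tree) (D : deflist Sigma) (A : St -> Prop).

Definition or_left D f1 f2 A : St -> Prop :=
  fun s => A s /\ psem (val_of V D (rank V D (POr f1 f2) s)) f1 s.
Definition or_right D f1 f2 A : St -> Prop :=
  fun s => A s /\ ~ psem (val_of V D (rank V D (POr f1 f2) s)) f1 s.
Definition post K A : St -> Prop := fun s' => exists s, A s /\ stepK trans K s s'.
Definition witness D K f : St -> St := fun s =>
  epsilon (inhabits s)
    (fun s' => stepK trans K s s' /\ psem (val_of V D (rank V D (PDia K f) s)) f s').
Definition image (w : St -> St) A : St -> Prop := fun s' => exists s, A s /\ s' = w s.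

Definition fix_node A D f U (body : tree) : tree :=
  let D' := D ++ [(U, f)] in
  Int (mkSeq A D f) (RSig U)
    [Int (mkSeq A D' (PVar U)) RThin
      [Int (mkSeq (sat_sig V D' (PVar U)) D' (PVar U)) RUn [body]]].

(* [n] is fuel bounding [psize f].  At a fixpoint the node is thinned to all states
   satisfying the fresh constant [U], so that every later leaf [U] is a sigma-leaf. *)
Fixpoint build (n : nat) D A (f : pform Sigma) : tree :=
  match n with
  | 0 => Leaf (mkSeq A D f)
  | S n' =>
    match f with
    | PVar _ | PNVar _ => Leaf (mkSeq A D f)
    | PAnd f1 f2 => Int (mkSeq A D f) RAnd [build n' D A f1; build n' D A f2]
    | POr f1 f2 =>
        Int (mkSeq A D f) ROr
          [build n' D (or_left D f1 f2 A) f1; build n' D (or_right D f1 f2 A) f2]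
    | PBox K g => Int (mkSeq A D f) RBox [build n' D (post K A) g]
    | PDia K g =>
        Int (mkSeq A D f) (RDia (witness D K g)) [build n' D (image (witness D K g) A) g]
    | PNu Z g | PMu Z g =>
        let U := fresh_var D f in let D' := D ++ [(U, f)] in
        fix_node A D f U (build n' D' (sat_sig V D' (PVar U)) (psubst Z U g))
    end
  end.

(* The local relation [<_{n',n}] of [lt_step], read off the rule applied at [n]. *)
Definition step_cond (r : rule St) (f : pform Sigma) (s s' : St) : Prop :=
  match r, f with
  | RBox, PBox K _ => stepK trans K s s'
  | RDia w, _ => s' = w s
  | _, _ => s' = s
  end.

Definition rank_step (q : sequent Sigma St) (r : rule St) (q' : sequent Sigma St) : Prop :=
  forall s' s, sS q' s' -> sS q s -> step_cond r (sF q) s s' ->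
    lex_le (sD q) (firstn (length (sD q)) (rank V (sD q') (sF q') s')) (rank V (sD q) (sF q) s) /\
    (r = RUn -> forall U Z g, sF q = PVar U -> lookup (sD q) U = Some (PMu Z g) ->
      lex_lt (sD q) (firstn (length (sD q)) (rank V (sD q') (sF q') s')) (rank V (sD q) (sF q) s)).

Record node_ok t : Prop := {
  node_local : local_ok trans t;
  node_sat : forall s, sS (label t) s -> sat_sig V (sD (label t)) (sF (label t)) s;
  node_defs : defs_positive (sD (label t));
  node_children :
    match t with
    | Leaf _ => True
    | Int q r cs => forall c, In c cs ->
        (exists E, sD (label c) = sD q ++ E) /\ rank_step q r (label c)
    end }.

Definition all_subtrees (P : tree -> Prop) t : Prop :=
  forall p t', subtree t p = Some t' -> P t'.

Lemma all_subtrees_leaf (P : tree -> Prop) q : P (Leaf q) -> all_subtrees P (Leaf q).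
Proof. intros H [|i p] t' E; simpl in E; [inversion E; subst; auto|discriminate]. Qed.

Lemma all_subtrees_int (P : tree -> Prop) q r cs : P (Int q r cs) ->
  (forall c, In c cs -> all_subtrees P c) -> all_subtrees P (Int q r cs).
Proof.
  intros H Hc [|i p] t' E; simpl in E; [inversion E; subst; auto|].
  destruct (nth_error cs i) eqn:En; [|discriminate]. apply (Hc t (nth_error_In _ _ En) p); auto.
Qed.

Lemma subtree_app t p1 p2 :
  subtree t (p1 ++ p2) = match subtree t p1 with Some t1 => subtree t1 p2 | None => None end.
Proof.
  revert t; induction p1 as [|i p IH]; intro t; simpl; auto.
  destruct t; auto. destruct (nth_error l i); auto.
Qed.

Lemma all_subtrees_subtree (P : tree -> Prop) t p t' :
  all_subtrees P t -> subtree t p = Some t' -> all_subtrees P t'.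
Proof. intros H E p' t'' E'. apply (H (p ++ p')). rewrite subtree_app, E. auto. Qed.

Definition unfolds t (m : addr) U (q : sequent Sigma St) : Prop :=
  exists cs, subtree t m = Some (Int q RUn cs) /\ sF q = PVar U.

(* The last clause makes [m] the companion of the leaf [p] in the sense of [comp_leaf]. *)
Definition leaves_closed D t : Prop :=
  forall p q, subtree t p = Some (Leaf q) ->
   (exists Z, (sF q = PVar Z \/ sF q = PNVar Z) /\ ~ In Z (dom (sD q))) \/
   (exists U, sF q = PVar U /\ In U (dom (sD q)) /\
     (In U (dom D) \/
      exists m k q', p = m ++ k /\ k <> [] /\ unfolds t m U q' /\
        sS q' = sat_sig V (sD q') (PVar U) /\
        forall k1 k2 q'', p = m ++ k1 ++ k2 -> k1 <> [] -> k2 <> [] ->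
          ~ unfolds t (m ++ k1) U q'')).

Definition unfoldings_new D t : Prop :=
  forall m U q, unfolds t m U q -> ~ In U (dom D).

Lemma leaves_closed_int D q r cs :
  (forall c, In c cs -> leaves_closed D c) -> leaves_closed D (Int q r cs).
Proof.
  intros H [|i p] q0 E; simpl in E; [discriminate|].
  destruct (nth_error cs i) as [c|] eqn:En; [|discriminate].
  destruct (H c (nth_error_In _ _ En) p q0 E) as [L|[U [L1 [L2 [L3|L3]]]]];
    [left; auto|right; exists U; auto|right].
  destruct L3 as [m [k [q' [E1 [E2 [[cs' [E3 E4]] [E5 E6]]]]]]].
  exists U; split; auto; split; auto; right.
  exists (i :: m), k, q'. subst p. split; auto. split; auto.
  split; [exists cs'; simpl; rewrite En; auto|]. split; auto.
  intros k1 k2 q'' F1 F2 F3 [cs'' [F4 F5]]. simpl in F4. rewrite En in F4.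
  inversion F1. apply (E6 k1 k2 q''); auto. exists cs''; auto.
Qed.

Lemma unfoldings_new_int D q r cs : r <> RUn ->
  (forall c, In c cs -> unfoldings_new D c) -> unfoldings_new D (Int q r cs).
Proof.
  intros Hr H [|i p] U q0 [cs0 [E HU]]; simpl in E; [inversion E; subst; tauto|].
  destruct (nth_error cs i) as [c|] eqn:En; [|discriminate].
  apply (H c (nth_error_In _ _ En) p U q0). exists cs0; auto.
Qed.

Record tree_ok D A f t : Prop := {
  tree_nodes : all_subtrees node_ok t;
  tree_label : label t = mkSeq A D f;
  tree_leaves : leaves_closed D t;
  tree_unfoldings : unfoldings_new D t }.

Record build_inv (n : nat) D A f : Prop := {
  inv_size : psize f <= n;
  inv_defs : defs_positive D;
  inv_valid : valid_seq (mkSeq A D f);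
  inv_binders : binders_positive f;
  inv_sat : forall s, A s -> sat_sig V D f s }.

Lemma label_build n D A f : label (build n D A f) = mkSeq A D f.
Proof. destruct n; destruct f; reflexivity. Qed.

Lemma psem_rank D f s : defs_positive D -> sat_sig V D f s ->
  psem (val_of V D (rank V D f s)) f s.
Proof. intros Hok HC. apply (rank_spec Hok HC). Qed.

Lemma rank_le_of_sat D f f' s s' : defs_positive D -> sat_sig V D f s ->
  psem (val_of V D (rank V D f s)) f' s' ->
  sat_sig V D f' s' /\ lex_le D (firstn (length D) (rank V D f' s')) (rank V D f s).
Proof.
  intros Hok HC Hp. destruct (rank_spec Hok HC) as [Ha _].
  assert (HC' : sat_sig V D f' s') by (eexists; eauto).
  split; auto. destruct (rank_spec Hok HC') as [Ha' [_ L]].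
  rewrite firstn_length_eq by (eapply admissible_length; eauto). apply L; auto.
Qed.

Lemma witness_spec D K g s : defs_positive D -> sat_sig V D (PDia K g) s ->
  stepK trans K s (witness D K g s) /\
  psem (val_of V D (rank V D (PDia K g) s)) g (witness D K g s).
Proof.
  intros Hok HC. assert (Hp := psem_rank Hok HC). rewrite psem_dia in Hp.
  unfold witness. apply epsilon_spec. exact Hp.
Qed.

Definition direct_sub (f' f : pform Sigma) : Prop :=
  match f with
  | PAnd f1 f2 | POr f1 f2 => f' = f1 \/ f' = f2
  | PBox _ g | PDia _ g => f' = g
  | _ => False
  end.

Definition guided D A f r A' f' : Prop :=
  (forall s', A' s' -> exists s, A s /\ step_cond r f s s') /\
  (forall s' s, A' s' -> A s -> step_cond r f s s' ->
     psem (val_of V D (rank V D f s)) f' s').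

Lemma build_inv_direct_sub n D A f A' f' r : build_inv (S n) D A f ->
  direct_sub f' f -> guided D A f r A' f' -> build_inv n D A' f'.
Proof.
  intros [Hs Hok [Hv Hd] Hw Hsat] Hsub [Hpar Hstep].
  assert (Hf : psize f' <= n /\ (forall U, pnegfree U f' -> pnegfree U f) /\
               (forall U, pbound U f' -> pbound U f) /\ binders_positive f').
  { destruct f; simpl in Hsub, Hs, Hw; try contradiction;
      try (destruct Hsub as [E|E]); subst; simpl; repeat split; try lia; tauto. }
  destruct Hf as [Hs' [Hn [Hb Hw']]].
  split; auto.
  - split; auto. intros U HU. destruct (Hd U HU) as [H1 H2]. simpl in *; split; auto.
  - intros s' HA'. destruct (Hpar s' HA') as [s [HA Hst]].
    exists (rank V D f s). split; [apply (rank_spec Hok (Hsat s HA))|auto].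
Qed.

Definition builds_ok (n : nat) : Prop :=
  forall D A f, build_inv n D A f -> tree_ok D A f (build n D A f).

Lemma tree_ok_step n D A f r cs : builds_ok n -> build_inv (S n) D A f -> r <> RUn ->
  instance trans (mkSeq A D f) r (map (@label Sigma St) cs) ->
  (forall c, In c cs -> exists A' f',
     c = build n D A' f' /\ direct_sub f' f /\ guided D A f r A' f') ->
  tree_ok D A f (Int (mkSeq A D f) r cs).
Proof.
  intros IH HI Hr Hinst Hc.
  assert (Tc : forall c, In c cs -> exists A' f', tree_ok D A' f' c /\ guided D A f r A' f').
  { intros c Hin. destruct (Hc c Hin) as [A' [f' [-> [Hsub Hg]]]].
    exists A', f'. split; auto. apply IH. eapply build_inv_direct_sub; eauto. }
  destruct HI as [_ Hok Hv _ Hsat].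
  split.
  - apply all_subtrees_int.
    + split; [split; auto|exact Hsat|exact Hok|].
      simpl. intros c Hin. destruct (Tc c Hin) as [A' [f' [[_ Hl _ _] [_ Hstep]]]].
      rewrite Hl. split; [exists []; rewrite app_nil_r; auto|].
      intros s' s H1 H2 H3. split; [|intro; contradiction].
      apply rank_le_of_sat; auto.
    + intros c Hin. destruct (Tc c Hin) as [A' [f' [[Hn _ _ _] _]]]. exact Hn.
  - reflexivity.
  - apply leaves_closed_int. intros c Hin.
    destruct (Tc c Hin) as [A' [f' [[_ _ Hl _] _]]]. exact Hl.
  - apply unfoldings_new_int; auto.
    intros c Hin. destruct (Tc c Hin) as [A' [f' [[_ _ _ Hu] _]]]. exact Hu.
Qed.

Lemma build_literal_ok n D A f : build_inv n D A f ->
  (exists Z, f = PVar Z \/ f = PNVar Z) -> tree_ok D A f (Leaf (mkSeq A D f)).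
Proof.
  intros [_ Hok Hv _ Hsat] [Z HZ]. split.
  - apply all_subtrees_leaf. split; auto. split; auto.
  - reflexivity.
  - intros [|i p] q E; simpl in E; [|discriminate]. inversion E; subst q; simpl.
    destruct (classic (In Z (dom D))) as [Hin|Hn].
    + destruct HZ as [E'|E']; subst f.
      * right. exists Z; simpl; repeat split; auto.
      * exfalso. destruct Hv as [_ Hv]. destruct (Hv Z Hin) as [H1 _]. apply H1. simpl. auto.
    + left. exists Z; split; auto.
  - intros [|i p] U q [cs [E _]]; simpl in E; discriminate.
Qed.

Lemma build_and_ok n D A f1 f2 : builds_ok n -> build_inv (S n) D A (PAnd f1 f2) ->
  tree_ok D A (PAnd f1 f2) (build (S n) D A (PAnd f1 f2)).
Proof.
  intros IH HI. assert (Hp := fun s Hs => psem_rank (inv_defs HI) (inv_sat HI s Hs)).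
  cbn [build]. eapply tree_ok_step; [exact IH|exact HI|discriminate| |].
  - simpl. rewrite !label_build.
    exists f1, f2, (mkSeq A D f1), (mkSeq A D f2). repeat split; simpl; auto.
  - intros c [<-|[<-|[]]]; (eexists _, _; split; [reflexivity|split; [simpl; eauto|]]);
      (split; [intros s' Hs'; exists s'; simpl; auto|]);
      intros s' s _ Hs ->; specialize (Hp s Hs); rewrite psem_and in Hp; tauto.
Qed.

Lemma build_or_ok n D A f1 f2 : builds_ok n -> build_inv (S n) D A (POr f1 f2) ->
  tree_ok D A (POr f1 f2) (build (S n) D A (POr f1 f2)).
Proof.
  intros IH HI. assert (Hp := fun s Hs => psem_rank (inv_defs HI) (inv_sat HI s Hs)).
  cbn [build]. eapply tree_ok_step; [exact IH|exact HI|discriminate| |].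
  - simpl. rewrite !label_build.
    exists f1, f2, (mkSeq (or_left D f1 f2 A) D f1), (mkSeq (or_right D f1 f2 A) D f2).
    repeat split; simpl; auto.
    + intros Ha. destruct (classic (psem (val_of V D (rank V D (POr f1 f2) s)) f1 s));
        [left|right]; split; auto.
    + intros [[H _]|[H _]]; auto.
  - intros c [<-|[<-|[]]]; (eexists _, _; split; [reflexivity|split; [simpl; eauto|]]);
      (split; [intros s' [Hs' _]; exists s'; simpl; auto|]);
      intros s' s [_ Hf] Hs ->; auto.
    specialize (Hp s Hs); rewrite psem_or in Hp; tauto.
Qed.

Lemma build_box_ok n D A K g : builds_ok n -> build_inv (S n) D A (PBox K g) ->
  tree_ok D A (PBox K g) (build (S n) D A (PBox K g)).
Proof.
  intros IH HI. assert (Hp := fun s Hs => psem_rank (inv_defs HI) (inv_sat HI s Hs)).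
  cbn [build]. eapply tree_ok_step; [exact IH|exact HI|discriminate| |].
  - simpl. rewrite !label_build.
    exists K, g, (mkSeq (post K A) D g). repeat split; simpl; auto.
  - intros c [<-|[]]. eexists _, _. split; [reflexivity|split; [simpl; auto|]].
    split; [intros s' [s Hs]; exists s; auto|].
    intros s' s _ Hs Hst. specialize (Hp s Hs). rewrite psem_box in Hp. auto.
Qed.

Lemma build_dia_ok n D A K g : builds_ok n -> build_inv (S n) D A (PDia K g) ->
  tree_ok D A (PDia K g) (build (S n) D A (PDia K g)).
Proof.
  intros IH HI.
  assert (Hw := fun s Hs => witness_spec (inv_defs HI) (inv_sat HI s Hs)).
  cbn [build]. eapply tree_ok_step; [exact IH|exact HI|discriminate| |].
  - simpl. rewrite !label_build.
    exists K, g, (mkSeq (image (witness D K g) A) D g). repeat split; simpl; auto.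
    intros s Hs. apply (Hw s Hs).
  - intros c [<-|[]]. eexists _, _. split; [reflexivity|split; [simpl; auto|]].
    split; [intros s' [s Hs]; exists s; auto|].
    intros s' s _ Hs ->. apply (Hw s Hs).
Qed.

Lemma valid_deflist_snoc D U f : valid_deflist D -> fresh U D f ->
  (forall U0, In U0 (dom D) -> ~ pbound U0 f) -> valid_deflist (D ++ [(U, f)]).
Proof.
  intros [H1 [H2 H3]] [F1 [F2 F3]] Hb. split; [|split].
  - rewrite dom_app. simpl. apply NoDup_app; auto; [repeat constructor; auto|].
    intros a Ha [E|E]; [subst; auto|contradiction].
  - intros U0 g HU Hg. rewrite dom_app in HU. rewrite map_app in Hg. simpl in *.
    apply in_app_or in HU; apply in_app_or in Hg.
    destruct HU as [HU|[HU|HU]]; destruct Hg as [Hg|[Hg|Hg]]; try contradiction; subst.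
    + apply H2; auto.
    + apply Hb; auto.
    + intro X; apply (F3 g Hg); apply pbound_pmentions; auto.
    + intro X; apply F2; apply pbound_pmentions; auto.
  - intros i j Ui fi Uj fj Hij Ei Ej.
    destruct (Nat.lt_ge_cases j (length D)) as [Hj|Hj].
    + rewrite nth_error_app1 in Ej by auto. rewrite nth_error_app1 in Ei by lia.
      exact (H3 i j Ui fi Uj fj Hij Ei Ej).
    + rewrite nth_error_app2 in Ej by auto. destruct (j - length D) as [|k] eqn:Ek; simpl in Ej;
        [|destruct k; discriminate]. inversion Ej; subst Uj fj.
      destruct (Nat.lt_ge_cases i (length D)) as [Hi|Hi].
      * rewrite nth_error_app1 in Ei by auto. apply nth_error_In in Ei.
        intro X. apply (F3 fi); [apply in_rhs_iff; eauto|]. apply pfree_pmentions; auto.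
      * rewrite nth_error_app2 in Ei by auto. destruct (i - length D) as [|k] eqn:Ek'; simpl in Ei;
          [|destruct k; discriminate]. inversion Ei; subst.
        intro X; apply F2; apply pfree_pmentions; auto.
Qed.

Section FixpointNode.
Variables (n : nat) (D : deflist Sigma) (A : St -> Prop) (f g : pform Sigma) (Z U : var).
Hypothesis HI : build_inv (S n) D A f.
Hypothesis Hf : f = PNu Z g \/ f = PMu Z g.
Hypothesis Hfr : fresh U D f.

Local Notation D' := (D ++ [(U, f)]).
Local Notation T := (sat_sig V D' (PVar U)).

Lemma fix_body_fresh : ~ pmentions U g.
Proof. destruct Hfr as [_ [H _]]. intro X; apply H. destruct Hf; subst f; simpl; auto. Qed.

Lemma fix_body_props : ~ pnegfree Z g /\ binders_positive g /\ psize g <= n.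
Proof.
  destruct HI as [Hs _ _ Hw _]. destruct Hf; subst f; simpl in Hs, Hw; repeat split; try tauto; lia.
Qed.

Lemma fix_defs_positive : defs_positive D'.
Proof.
  intros U0 h Hi. apply in_app_or in Hi. destruct Hi as [Hi|[Hi|[]]].
  - apply (inv_defs HI U0 h Hi).
  - inversion Hi; subst h. destruct fix_body_props as [Hpos _]. destruct Hf; subst f; exact Hpos.
Qed.

Lemma fix_valid_deflist : valid_deflist D'.
Proof.
  destruct (inv_valid HI) as [Hv Hd]. apply valid_deflist_snoc; auto.
  intros U0 H0. apply (Hd U0 H0).
Qed.

Lemma fix_in_dom : In U (dom D').
Proof. rewrite dom_app. apply in_or_app. simpl. auto. Qed.

Lemma fix_lookup : lookup D' U = Some f.
Proof. apply lookup_last. apply Hfr. Qed.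

Lemma fix_is_fixpoint : is_fixpoint f.
Proof. exists Z, g. exact Hf. Qed.

Lemma fix_thin s : A s -> T s.
Proof. intro Hs. apply (rank_snoc U fix_is_fixpoint fix_defs_positive (inv_sat HI s Hs)). Qed.

Lemma fix_body_valid : valid_seq (mkSeq T D' (psubst Z U g)).
Proof.
  destruct (inv_valid HI) as [Hv Hd]. destruct fix_body_props as [Hpos _].
  split; [exact fix_valid_deflist|]. intros U0 HU0. simpl in HU0 |- *.
  rewrite dom_app in HU0. simpl in HU0. apply in_app_or in HU0. split.
  - intro X. apply pnegfree_psubst in X. destruct X as [[X1 X2]|[X1 X2]]; [|tauto].
    destruct HU0 as [HU0|[HU0|[]]].
    + apply (proj1 (Hd U0 HU0)). simpl. destruct Hf; subst f; simpl; auto.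
    + subst U0. apply fix_body_fresh. apply pfree_pmentions, pnegfree_pfree; auto.
  - intro X. apply pbound_psubst in X. destruct HU0 as [HU0|[HU0|[]]].
    + apply (proj2 (Hd U0 HU0)). simpl. destruct Hf; subst f; simpl; auto.
    + subst U0. apply fix_body_fresh. apply pbound_pmentions; auto.
Qed.

Lemma rank_unfold s : T s ->
  sat_sig V D' (psubst Z U g) s /\
  lex_le D' (rank V D' (psubst Z U g) s) (rank V D' (PVar U) s) /\
  (forall Z' g', f = PMu Z' g' ->
     lex_lt D' (rank V D' (psubst Z U g) s) (rank V D' (PVar U) s)).
Proof.
  intro HT. destruct fix_body_props as [Hpos _].
  assert (Hok := fix_defs_positive). assert (Hm := fix_body_fresh).
  destruct Hf as [E|E]; subst f.
  - assert (Hp := @sat_unfold_nu D U Z g s _ Hm Hpos (proj1 (rank_spec Hok HT)) (psem_rank Hok HT)).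
    destruct (rank_le_of_sat _ _ Hok HT Hp) as [HC L].
    destruct (rank_spec Hok HC) as [Ha _].
    rewrite firstn_length_eq in L by (eapply admissible_length; eauto).
    split; [auto|split; [auto|discriminate]].
  - destruct (@sat_unfold_mu D U Z g s _ Hm Hpos (rank_spec Hok HT)) as [r' [Ha' [Lt Hp']]].
    assert (HC' : sat_sig V (D ++ [(U, PMu Z g)]) (psubst Z U g) s) by (exists r'; auto).
    destruct (rank_spec Hok HC') as [_ [_ Hl]].
    assert (Lt2 := lex_le_lt_trans _ (Hl r' Ha' Hp') Lt).
    split; [auto|split; [left; auto|auto]].
Qed.

Lemma fix_body_inv : build_inv n D' T (psubst Z U g).
Proof.
  destruct fix_body_props as [Hpos [Hw Hs]]. split.
  - rewrite psize_psubst; auto.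
  - exact fix_defs_positive.
  - exact fix_body_valid.
  - apply binders_positive_psubst; auto. intro X; apply fix_body_fresh, pbound_pmentions; auto.
  - intros s HT. apply (rank_unfold HT).
Qed.

Variable body : tree.
Hypothesis Hbody : tree_ok D' T (psubst Z U g) body.

Lemma fix_node_nodes_ok : all_subtrees node_ok (fix_node A D f U body).
Proof.
  assert (Hok' := fix_defs_positive).
  assert (VU : forall X, valid_seq (mkSeq X D' (PVar U))).
  { intro X. split; [exact fix_valid_deflist|]. intros U0 _. simpl. tauto. }
  destruct HI as [_ Hok Hv _ Hsat]. destruct Hbody as [Hn Hl _ _].
  apply all_subtrees_int; [|intros c [<-|[]]; apply all_subtrees_int; [|intros c [<-|[]];
    apply all_subtrees_int; [|intros c [<-|[]]; exact Hn]]].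
  - split; [split; [exact Hv|]|exact Hsat|exact Hok|].
    + exists (mkSeq A D' (PVar U)). split; [reflexivity|].
      split; [exact fix_is_fixpoint|]. split; [exact Hfr|]. repeat split; auto.
    + simpl. intros c [<-|[]]. split; [exists [(U, f)]; auto|].
      intros s' s _ Hs ->. split; [|discriminate].
      apply (rank_snoc U fix_is_fixpoint Hok' (Hsat s Hs)).
  - split; [split; [apply VU|]|exact fix_thin|exact Hok'|].
    + exists (mkSeq T D' (PVar U)). repeat split; auto. exact fix_thin.
    + simpl. intros c [<-|[]]. split; [exists []; rewrite app_nil_r; auto|].
      intros s' s _ Hs ->. split; [|discriminate].
      destruct (rank_spec Hok' (fix_thin Hs)) as [Ha _].
      rewrite firstn_length_eq by (eapply admissible_length; eauto). right; auto.
  - split; [split; [apply VU|]|simpl; auto|exact Hok'|].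
    + simpl. rewrite Hl. exists U, Z, g, (mkSeq T D' (psubst Z U g)). repeat split; auto.
      rewrite fix_lookup. destruct Hf; subst f; auto.
    + simpl. intros c [<-|[]]. rewrite Hl. split; [exists []; rewrite app_nil_r; auto|].
      intros s' s _ HT ->. simpl.
      destruct (rank_unfold HT) as [HC [Le Lt]].
      destruct (rank_spec Hok' HC) as [Ha _].
      rewrite firstn_length_eq by (eapply admissible_length; eauto).
      split; auto. intros _ U0 Z0 g0 E0 E1. inversion E0; subst U0.
      rewrite fix_lookup in E1. injection E1 as E1. exact (Lt _ _ E1).
Qed.

Lemma fix_node_leaves_closed : leaves_closed D (fix_node A D f U body).
Proof.
  destruct Hbody as [_ _ Hl Hu].
  intros p q E.
  destruct p as [|[|i] p]; simpl in E; [discriminate| |destruct i; discriminate].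
  destruct p as [|[|i] p]; simpl in E; [discriminate| |destruct i; discriminate].
  destruct p as [|[|i] p]; simpl in E; [discriminate| |destruct i; discriminate].
  destruct (Hl p q E) as [L|[U0 [L1 [L2 [L4|L4]]]]];
    [left; auto|right; exists U0; split; auto; split; auto|].
  - rewrite dom_app in L4; simpl in L4; apply in_app_or in L4.
    destruct L4 as [L4|[<-|[]]]; [left; auto|right].
    exists [0; 0], (0 :: p), (mkSeq T D' (PVar U)). split; [reflexivity|]. split; [discriminate|].
    split; [exists [body]; auto|]. split; [reflexivity|].
    intros [|j k1] k2 q'' E1 Hk1 Hk2 [cs'' [Hs Hq]]; [congruence|].
    simpl in E1. inversion E1; subst j p. simpl in Hs.
    apply (Hu k1 U q''); [exists cs''; auto|exact fix_in_dom].
  - right. exists U0. split; [auto|split; [auto|right]].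
    destruct L4 as [m [k [q' [E1 [E2 [[cs [E3 E4]] [E5 E6]]]]]]].
    exists (0 :: 0 :: 0 :: m), k, q'. subst p.
    split; [reflexivity|]. split; auto. split; [exists cs; auto|]. split; auto.
    intros k1 k2 q'' G1 Hk1 Hk2 [cs'' [G2 G3]]. simpl in G1. inversion G1.
    apply (E6 k1 k2 q''); auto. exists cs''; auto.
Qed.

Lemma fix_node_unfoldings_new : unfoldings_new D (fix_node A D f U body).
Proof.
  destruct Hbody as [_ _ _ Hu].
  intros m U0 q [cs [E HU0]].
  destruct m as [|[|i] m]; simpl in E; [discriminate| |destruct i; discriminate].
  destruct m as [|[|i] m]; simpl in E; [discriminate| |destruct i; discriminate].
  destruct m as [|[|i] m]; simpl in E; [| |destruct i; discriminate].
  - inversion E; subst q. simpl in HU0. inversion HU0; subst U0. apply Hfr.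
  - intro Hin. apply (Hu m U0 q); [exists cs; auto|].
    rewrite dom_app; apply in_or_app; auto.
Qed.

Lemma fix_node_ok : tree_ok D A f (fix_node A D f U body).
Proof.
  split.
  - exact fix_node_nodes_ok.
  - reflexivity.
  - exact fix_node_leaves_closed.
  - exact fix_node_unfoldings_new.
Qed.

End FixpointNode.

Lemma build_tree_ok n : builds_ok n.
Proof.
  induction n as [|n IH]; intros D A f HI.
  - pose proof (inv_size HI). pose proof (psize_pos f). lia.
  - destruct f as [v|v|f1 f2|f1 f2|K g|K g|Z g|Z g].
    + apply (build_literal_ok HI). eauto.
    + apply (build_literal_ok HI). eauto.
    + apply build_and_ok; auto.
    + apply build_or_ok; auto.
    + apply build_box_ok; auto.
    + apply build_dia_ok; auto.
    + apply (fix_node_ok HI (or_introl eq_refl) (fresh_var_fresh D _)).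
      apply IH. apply (fix_body_inv HI (or_introl eq_refl) (fresh_var_fresh D _)).
    + apply (fix_node_ok HI (or_intror eq_refl) (fresh_var_fresh D _)).
      apply IH. apply (fix_body_inv HI (or_intror eq_refl) (fresh_var_fresh D _)).
Qed.

(** * Success of the constructed tableau *)

Lemma defs_extend_subtree k : forall t1 t2, all_subtrees node_ok t1 -> subtree t1 k = Some t2 ->
  exists E, sD (label t2) = sD (label t1) ++ E.
Proof.
  induction k as [|i k IH]; intros t1 t2 HA H.
  - simpl in H; inversion H; subst. exists []; rewrite app_nil_r; auto.
  - destruct t1 as [q|q r cs]; simpl in H; [discriminate|].
    destruct (nth_error cs i) as [c|] eqn:Ec; [|discriminate].
    destruct (HA [] _ eq_refl) as [_ _ _ Hch].
    destruct (Hch c (nth_error_In _ _ Ec)) as [[E1 HE1] _].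
    assert (HAc : all_subtrees node_ok c)
      by (apply (all_subtrees_subtree [i] HA); simpl; rewrite Ec; auto).
    destruct (IH c t2 HAc H) as [E2 HE2]. exists (E1 ++ E2).
    rewrite HE2, HE1. simpl. rewrite app_assoc; auto.
Qed.

Section Analysis.
Variable tr : tree.
Hypothesis Hnodes : all_subtrees node_ok tr.

Definition defs_at (n : addr) : deflist Sigma :=
  match seqAt tr n with Some q => sD q | None => [] end.
Definition rank_at (n : addr) (s : St) : signature :=
  match seqAt tr n with Some q => rank V (sD q) (sF q) s | None => [] end.

Lemma seqAt_subtree n t : subtree tr n = Some t -> seqAt tr n = Some (label t).
Proof. intro H; unfold seqAt; rewrite H; auto. Qed.

Lemma SAt_subtree n s : SAt tr n s -> exists t, subtree tr n = Some t /\ sS (label t) s.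
Proof. unfold SAt, seqAt. destruct (subtree tr n); simpl; [eauto|tauto]. Qed.

Lemma admissible_rank_at n s : SAt tr n s -> admissible V (defs_at n) (rank_at n s).
Proof.
  intro H. destruct (SAt_subtree n s H) as [t [Ht Hs]].
  unfold defs_at, rank_at. rewrite (seqAt_subtree n Ht).
  destruct (Hnodes n Ht) as [_ Hsat Hok _].
  apply (rank_spec Hok (Hsat s Hs)).
Qed.

Lemma firstn_rank_at n s : SAt tr n s -> firstn (length (defs_at n)) (rank_at n s) = rank_at n s.
Proof. intro H. apply firstn_length_eq. eapply admissible_length, admissible_rank_at, H. Qed.

Definition sig_le (m : addr) (s' : St) (n : addr) (s : St) : Prop :=
  exists E, defs_at m = defs_at n ++ E /\
  lex_le (defs_at n) (firstn (length (defs_at n)) (rank_at m s')) (rank_at n s).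
Definition sig_lt (m : addr) (s' : St) (n : addr) (s : St) : Prop :=
  exists E, defs_at m = defs_at n ++ E /\
  lex_lt (defs_at n) (firstn (length (defs_at n)) (rank_at m s')) (rank_at n s).

Lemma sig_le_refl n s : SAt tr n s -> sig_le n s n s.
Proof.
  intro H. exists []. rewrite app_nil_r, firstn_rank_at by auto. split; [auto|right; auto].
Qed.

Lemma sig_le_trans a x b y c z : sig_le a x b y -> sig_le b y c z -> sig_le a x c z.
Proof.
  intros [E1 [HE1 L1]] [E2 [HE2 L2]]. exists (E2 ++ E1).
  rewrite HE1, HE2, app_assoc. split; auto.
  rewrite HE2 in L1. apply lex_le_cut in L1.
  eapply lex_le_trans; eauto.
Qed.

Lemma sig_le_lt_trans a x b y c z : sig_le a x b y -> sig_lt b y c z -> sig_lt a x c z.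
Proof.
  intros [E1 [HE1 L1]] [E2 [HE2 L2]]. exists (E2 ++ E1).
  rewrite HE1, HE2, app_assoc. split; auto.
  rewrite HE2 in L1. apply lex_le_cut in L1.
  eapply lex_le_lt_trans; eauto.
Qed.

Lemma child_subtree n i : node tr (n ++ [i]) -> exists q r cs c,
  subtree tr n = Some (Int q r cs) /\ nth_error cs i = Some c /\ subtree tr (n ++ [i]) = Some c.
Proof.
  unfold node. rewrite subtree_app. destruct (subtree tr n) as [[q|q r cs]|]; simpl; try tauto.
  destruct (nth_error cs i) as [c|] eqn:E; [|tauto]. intros _. exists q, r, cs, c; auto.
Qed.

Definition mu_companion (n : addr) : Prop := exists q cs U Z g,
  subtree tr n = Some (Int q RUn cs) /\ sF q = PVar U /\ lookup (sD q) U = Some (PMu Z g).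

Lemma lt_step_sig m n s'' s : lt_step trans tr m n s'' s ->
  sig_le m s'' n s /\ (mu_companion n -> sig_lt m s'' n s).
Proof.
  intros [[Hnode [i ->]] [H1 [H2 H3]]].
  destruct (child_subtree n i Hnode) as [q [r [cs [c [Hn [Hc Hm]]]]]].
  destruct (Hnodes n Hn) as [_ _ _ Hch].
  destruct (Hch c (nth_error_In _ _ Hc)) as [[E HE] RS].
  unfold sig_le, sig_lt, defs_at, rank_at. rewrite (seqAt_subtree _ Hn), (seqAt_subtree _ Hm).
  unfold SAt in H1, H2. rewrite (seqAt_subtree _ Hn) in H2. rewrite (seqAt_subtree _ Hm) in H1.
  unfold ruleAt, fmAt in H3. rewrite (seqAt_subtree _ Hn), Hn in H3.
  assert (SC : step_cond r (sF q) s s'') by (unfold step_cond; destruct r; auto).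
  destruct (RS s'' s H1 H2 SC) as [L1 L2].
  split; [exists E; auto|].
  intros [q' [cs' [U [Z [g [Hn' [HF HL]]]]]]]. rewrite Hn in Hn'. inversion Hn'; subst q' cs' r.
  exists E. split; auto. apply (L2 eq_refl U Z g HF HL).
Qed.

Lemma trace_sig_le n' n s' s : trace trans tr n' n s' s -> sig_le n' s' n s.
Proof.
  induction 1 as [n s Hs|n' m n s' s'' s _ IH Hst]; [apply sig_le_refl; auto|].
  eapply sig_le_trans; [exact IH|apply (lt_step_sig Hst)].
Qed.

Lemma trace_sig_lt n' n s' s : trace trans tr n' n s' s -> n' <> n -> mu_companion n ->
  sig_lt n' s' n s.
Proof.
  intros Htr Hne Hmu. inversion Htr as [|n'0 m n0 s'0 s'' s0 Htr' Hst]; subst; [congruence|].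
  eapply sig_le_lt_trans; [apply (trace_sig_le Htr')|apply (lt_step_sig Hst); auto].
Qed.

Lemma companion_unfolds m : companion tr m -> exists q cs U Z g,
  subtree tr m = Some (Int q RUn cs) /\ sF q = PVar U /\
  (lookup (sD q) U = Some (PNu Z g) \/ lookup (sD q) U = Some (PMu Z g)).
Proof.
  unfold companion, ruleAt. destruct (subtree tr m) as [[q|q r cs]|] eqn:Hm; try discriminate.
  intro E; inversion E; subst r.
  destruct (Hnodes m Hm) as [[_ Hi] _ _ _]. simpl in Hi.
  destruct Hi as [U [Z [g [q1 [H1 [_ [H3 _]]]]]]]. exists q, cs, U, Z, g. auto.
Qed.

Lemma cleaf_fuel_cond k m m' : cleaf_fuel tr k m m' -> cl_cond tr m m'.
Proof. destruct k; simpl; tauto. Qed.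

(* Cutting a signature of [U] down to the companion's list still satisfies [U]. *)
Lemma companion_leaf_sig m m' s' : companion tr m -> comp_leaf tr m m' -> SAt tr m' s' ->
  (exists E, defs_at m' = defs_at m ++ E) ->
  SAt tr m s' /\ lex_le (defs_at m) (rank_at m s') (firstn (length (defs_at m)) (rank_at m' s')).
Proof.
  intros Hc Hcl Hs [E HE].
  destruct (companion_unfolds Hc) as [q [cs [U [Z [g [Hm [HF HL]]]]]]].
  destruct (cleaf_fuel_cond _ m m' Hcl) as [_ [_ [_ [Hfm Hsub]]]].
  destruct (SAt_subtree m' s' Hs) as [t' [Ht' Hs']].
  unfold fmAt in Hfm. rewrite (seqAt_subtree _ Ht'), (seqAt_subtree _ Hm) in Hfm.
  simpl in Hfm. injection Hfm as Hf'. rewrite HF in Hf'.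
  split; [apply Hsub; auto|].
  unfold defs_at, rank_at in *. rewrite (seqAt_subtree _ Ht'), (seqAt_subtree _ Hm) in *.
  simpl in *.
  destruct (Hnodes m' Ht') as [[[[Hnd _] _] _] Hsat Hok _].
  rewrite HE in Hok, Hnd. rewrite Hf', HF.
  assert (Hin : In U (dom (sD q))) by (destruct HL as [HL|HL]; eapply lookup_in; eauto).
  assert (HC := Hsat s' Hs'). rewrite HE, Hf' in HC.
  rewrite HE. apply (rank_restrict _ _ Hok Hnd Hin HC).
Qed.

Lemma sig_lt_at m a b : SAt tr m a -> sig_lt m a m b ->
  lex_lt (defs_at m) (rank_at m a) (rank_at m b).
Proof. intros Ha [E [_ L]]. rewrite firstn_rank_at in L; auto. Qed.

Lemma companion_sig_le m m' a b : companion tr m -> comp_leaf tr m m' -> SAt tr m' a ->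
  sig_le m' a m b -> SAt tr m a /\ sig_le m a m b.
Proof.
  intros Hc Hcl Ha [E [HE L]].
  destruct (companion_leaf_sig m' a Hc Hcl Ha (ex_intro _ E HE)) as [Ham L0].
  split; auto. exists []. rewrite app_nil_r, firstn_rank_at by auto.
  split; [auto|eapply lex_le_trans; eauto].
Qed.

Lemma companion_sig_lt m m' a b : companion tr m -> comp_leaf tr m m' -> SAt tr m' a ->
  sig_lt m' a m b -> SAt tr m a /\ sig_lt m a m b.
Proof.
  intros Hc Hcl Ha [E [HE L]].
  destruct (companion_leaf_sig m' a Hc Hcl Ha (ex_intro _ E HE)) as [Ham L0].
  split; auto. exists []. rewrite app_nil_r, firstn_rank_at by auto.
  split; [auto|eapply lex_le_lt_trans; eauto].
Qed.

Scheme extN_mind := Induction for extN Sort Prop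
  with extM_mind := Induction for extM Sort Prop
  with extP_mind := Induction for extP Sort Prop.
Combined Scheme ext_mutind from extN_mind, extM_mind, extP_mind.

Lemma ext_sig_le :
  (forall n' n s' s, extN trans tr n' n s' s -> sig_le n' s' n s) /\
  (forall m a b, extM trans tr m a b -> sig_le m a m b) /\
  (forall m a b, extP trans tr m a b -> sig_le m a m b).
Proof.
  apply (ext_mutind (fun n' n s' s _ => sig_le n' s' n s)
    (fun m a b _ => sig_le m a m b) (fun m a b _ => sig_le m a m b)).
  - intros n' n s' s _ _ Htr. apply trace_sig_le; auto.
  - intros n' n m s' s t t' _ _ _ _ _ _ _ _ L1 _ L2 Htr.
    eapply sig_le_trans; [exact L1|]. eapply sig_le_trans; [exact L2|]. apply trace_sig_le; auto.
  - intros m m' s' s Hc Hcl Hs' _ L. eapply companion_sig_le; eauto.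
  - auto.
  - intros m a b c _ L1 _ L2. eapply sig_le_trans; eauto.
Qed.

(* Every dependency chain of a mu-companion re-enters it from its child, i.e. through the
   unfolding of its mu-constant. *)
Lemma extM_sig_lt m a b : mu_companion m -> extM trans tr m a b -> SAt tr m a /\ sig_lt m a m b.
Proof.
  intros Hmu H. inversion H as [m0 m' s' s Hc Hcl Hs' HN]; subst.
  eapply companion_sig_lt; [exact Hc|exact Hcl|exact Hs'|].
  destruct (cleaf_fuel_cond _ m m' Hcl) as [_ [_ [[_ [k [Hk Em]]] _]]].
  assert (Hne : m' <> m).
  { intros ->. rewrite <- (app_nil_r m) in Em at 1. apply app_inv_head in Em. congruence. }
  inversion HN as [n'0 n0 s'0 s0 _ _ Htr|n'0 n0 m2 s'0 s0 t t' _ _ _ Hm2 _ _ _ HN2 HP Htr];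
    subst.
  - apply trace_sig_lt; auto.
  - eapply sig_le_lt_trans; [apply (proj1 ext_sig_le _ _ _ _ HN2)|].
    eapply sig_le_lt_trans; [apply (proj2 (proj2 ext_sig_le) _ _ _ HP)|].
    apply trace_sig_lt; auto.
Qed.

Lemma extM_wf m : mu_companion m -> well_founded (extM trans tr m).
Proof.
  intros Hmu.
  assert (Hok : defs_positive (defs_at m)).
  { destruct Hmu as [q [cs [U [Z [g [Hm _]]]]]]. destruct (Hnodes m Hm) as [_ _ Hok _].
    unfold defs_at. rewrite (seqAt_subtree _ Hm). auto. }
  apply (wf_incl _ _ (fun a b => lex_lt_adm V (defs_at m) (rank_at m a) (rank_at m b))).
  - intros a b H. destruct (extM_sig_lt Hmu H) as [Ha L].
    split; [apply admissible_rank_at; auto|apply sig_lt_at; auto].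
  - apply wf_inverse_image. apply lex_lt_adm_wf; auto.
Qed.

Lemma leaf_literal_ok n q Z : subtree tr n = Some (Leaf q) ->
  (sF q = PVar Z \/ sF q = PNVar Z) -> ~ In Z (dom (sD q)) ->
  terminal trans tr n /\ successful_leaf trans V tr n.
Proof.
  intros Hn HZ Hnin. assert (Hq := seqAt_subtree _ Hn).
  destruct (Hnodes n Hn) as [_ Hsat _ _]. simpl in Hsat.
  split; [exists q; split; auto; left; exists Z; auto|].
  exists q. split; auto.
  destruct HZ as [HZ|HZ]; [left|right; left]; exists Z; repeat split; auto;
    intros s Hs; destruct (Hsat s Hs) as [r [_ Hp]]; rewrite HZ in Hp;
    [rewrite psem_var in Hp|rewrite psem_nvar in Hp]; rewrite val_of_notin in Hp; auto.
Qed.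

Section LeafBelowCompanion.
Variables (n m k : addr) (q q' : sequent Sigma St) (cs : list tree) (U : var).
Hypothesis Hn : subtree tr n = Some (Leaf q).
Hypothesis HF : sF q = PVar U.
Hypothesis Hk : n = m ++ k.
Hypothesis Hk0 : k <> [].
Hypothesis Hm : subtree tr m = Some (Int q' RUn cs).
Hypothesis HF' : sF q' = PVar U.
Hypothesis HS' : sS q' = sat_sig V (sD q') (PVar U).
Hypothesis Hbetween : forall k1 k2 q'', n = m ++ k1 ++ k2 -> k1 <> [] -> k2 <> [] ->
  ~ unfolds tr (m ++ k1) U q''.

Lemma companion_lookup : exists Z g,
  lookup (sD q') U = Some (PNu Z g) \/ lookup (sD q') U = Some (PMu Z g).
Proof.
  destruct (Hnodes m Hm) as [[_ Hinst] _ _ _]. simpl in Hinst.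
  destruct Hinst as [U1 [Z [g [q1 [HF1 [_ [HL _]]]]]]].
  rewrite HF' in HF1. injection HF1 as <-. eauto.
Qed.

Lemma leaf_defs_extend : exists E, sD q = sD q' ++ E.
Proof.
  assert (Hsub : subtree (Int q' RUn cs) k = Some (Leaf q))
    by (rewrite Hk, subtree_app, Hm in Hn; exact Hn).
  apply (defs_extend_subtree k (all_subtrees_subtree m Hnodes Hm) Hsub).
Qed.

Lemma leaf_lookup : In U (dom (sD q')) /\ lookup (sD q) U = lookup (sD q') U.
Proof.
  destruct companion_lookup as [Z [g HL]]. destruct leaf_defs_extend as [E ->].
  assert (Hin : In U (dom (sD q'))) by (destruct HL as [HL|HL]; eapply lookup_in; eauto).
  split; auto. apply lookup_app; auto.
Qed.

Lemma leaf_subset : subset (SAt tr n) (SAt tr m).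
Proof.
  intros s Hs. unfold SAt in *. rewrite (seqAt_subtree _ Hn) in Hs. rewrite (seqAt_subtree _ Hm).
  simpl in *. rewrite HS'.
  destruct (Hnodes n Hn) as [[[[Hnd _] _] _] Hsat Hok _]. simpl in Hnd, Hsat, Hok.
  destruct leaf_defs_extend as [E HE]. rewrite HE in Hnd, Hok, Hsat.
  assert (HC := Hsat s Hs). rewrite HF in HC.
  apply (rank_restrict _ _ Hok Hnd (proj1 leaf_lookup) HC).
Qed.

Lemma leaf_strict_anc : strict_anc tr m n.
Proof. split; [unfold node; rewrite Hn; discriminate|]. exists k; auto. Qed.

Lemma leaf_fmAt : fmAt tr n = fmAt tr m.
Proof. unfold fmAt. rewrite (seqAt_subtree _ Hn), (seqAt_subtree _ Hm). simpl. congruence. Qed.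

Lemma leaf_sigma_leaf : sigma_leaf tr n.
Proof.
  exists q, U. split; [apply (seqAt_subtree _ Hn)|]. split; [exists q; auto|].
  split; auto. split; [destruct leaf_defs_extend as [E ->]; rewrite dom_app;
    apply in_or_app; left; apply leaf_lookup|].
  exists m. split; [apply leaf_strict_anc|]. split; [rewrite <- leaf_fmAt|apply leaf_subset].
  unfold fmAt. rewrite (seqAt_subtree _ Hn). simpl. congruence.
Qed.

Lemma leaf_comp_leaf : comp_leaf tr m n.
Proof.
  unfold comp_leaf.
  assert (Hlen : length n <> 0) by (rewrite Hk, length_app; destruct k; [congruence|simpl; lia]).
  destruct (length n) as [|k'] eqn:Hl; [congruence|]. simpl. split.
  - split; [unfold companion, ruleAt; rewrite Hm; auto|].
    split; [exists q; auto|]. split; [apply leaf_strict_anc|].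
    split; [apply leaf_fmAt|apply leaf_subset].
  - intros [m' [Hc' [[_ [k1 [Hk1 ->]]] Hcf]]].
    destruct (cleaf_fuel_cond _ _ _ Hcf) as [_ [_ [[_ [k2 [Hk2 En]]] [Hfm _]]]].
    destruct (companion_unfolds Hc') as [q'' [cs'' [U'' [Z'' [g'' [Hm'' [HF'' _]]]]]]].
    unfold fmAt in Hfm. rewrite (seqAt_subtree _ Hn), (seqAt_subtree _ Hm'') in Hfm.
    simpl in Hfm. injection Hfm as Hfm. rewrite HF, HF'' in Hfm. injection Hfm as <-.
    eapply Hbetween; [rewrite En, <- app_assoc; reflexivity|exact Hk1|exact Hk2|].
    exists cs''; eauto.
Qed.

Lemma leaf_below_companion_ok : terminal trans tr n /\ successful_leaf trans V tr n.
Proof.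
  assert (Hq := seqAt_subtree _ Hn).
  split; [exists q; split; auto; right; right; exact leaf_sigma_leaf|].
  exists q. split; auto.
  destruct companion_lookup as [Z [g [HL|HL]]]; rewrite <- (proj2 leaf_lookup) in HL.
  - right; right; left. split; [exact leaf_sigma_leaf|]. exists q, U, Z, g; auto.
  - right; right; right. split; [split; [exact leaf_sigma_leaf|exists q, U, Z, g; auto]|].
    exists m. split; [exact leaf_comp_leaf|]. apply extM_wf.
    exists q', cs, U, Z, g. rewrite (proj2 leaf_lookup) in HL. auto.
Qed.

End LeafBelowCompanion.

Hypothesis Hleaves : leaves_closed [] tr.

Lemma leaf_ok n : is_leaf tr n -> terminal trans tr n /\ successful_leaf trans V tr n.
Proof.
  intros [q Hn].
  destruct (Hleaves n Hn) as [[Z [HZ Hnin]]|[U [HF [_ [[]|L]]]]].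
  - apply (leaf_literal_ok n Hn HZ Hnin).
  - destruct L as [m [k [q' [Hk [Hk0 [[cs [Hm HF']] [HS' Hbetween]]]]]]].
    eapply leaf_below_companion_ok; eauto.
Qed.

End Analysis.

Lemma successful_of_tree_ok A f t : tree_ok [] A f t -> successful_tableau trans V t.
Proof.
  intros [Hnodes Hlabel Hleaves _].
  split; [split; [|split]|].
  - intros p t' Ht. apply (Hnodes p t' Ht).
  - rewrite Hlabel. auto.
  - intros n Hn. apply (leaf_ok Hnodes Hleaves Hn).
  - intros n Hn. apply (leaf_ok Hnodes Hleaves Hn).
Qed.

Lemma root_inv S Phi : well_formed (toform Phi) ->
  (forall s, S s -> sem trans V (toform Phi) s) -> build_inv (psize Phi) [] S Phi.
Proof.
  intros Hwf Hsem. split; auto.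
  - intros U g [].
  - split; [|intros U []]. split; [constructor|]. split; [intros U f []|].
    intros i j Ui fi Uj fj _ Ei. destruct i; discriminate.
  - apply well_formed_binders_positive; auto.
  - intros s Hs. exists []. split; [simpl; auto|]. apply Hsem; auto.
Qed.

End Completeness.

Theorem theorem4 (Sigma St : Type) (trans : St -> Sigma -> St -> Prop)
  (V : var -> St -> Prop) (S : St -> Prop) (Phi : pform Sigma) :
  well_formed (toform Phi) ->
  (forall s, S s -> sem trans V (toform Phi) s) ->
  exists tr : tree Sigma St,
    successful_tableau trans V tr /\ label tr = mkSeq S [] Phi.
Proof.
  intros Hwf Hsem.
  set (tr := build trans V (psize Phi) [] S Phi).
  assert (Htr : tree_ok trans V [] S Phi tr) by (apply build_tree_ok, root_inv; auto).
  exists tr. split; [exact (successful_of_tree_ok Htr)|exact (tree_label Htr)].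
Qed.
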